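(* For every sequent $\Gamma\Rightarrow\Delta$ of $\mathtt{TPDL}$, the following are equivalent: (1) $\Gamma\Rightarrow\Delta$ is provable in $\mathtt{GTPDL}$; (2) $\Gamma\Rightarrow\Delta$ is provable in $\mathtt{CGTPDL}$; (3) $\Gamma\Rightarrow\Delta$ is valid.
   Context: Fix sets $\mathsf{Prop}$ and $\mathsf{AtProg}$. $\mathtt{TPDL}$ formulas/programs: $\varphi ::= \bot \mid p \mid (\varphi\to\varphi) \mid [\pi]\varphi \mid [\pi]^{\leftarrow}\varphi$, $\pi ::= \alpha \mid \pi;\pi \mid \pi\cup\pi \mid \pi^{*} \mid \varphi?$. $[\pi]\Gamma=\{[\pi]\varphi:\varphi\in\Gamma\}$, similarly $[\pi]^{\leftarrow}\Gamma$. A model is $M=(W,(R_\alpha),V)$, $W\neq\emptyset$, $R_\alpha\subseteq W\times W$, $V:W\to\mathcal P(\mathsf{Prop})$; $R_{\pi_0;\pi_1}$ composition, $R_{\pi_0\cup\pi_1}$ union, $R_{\pi^*}$ reflexive–transitive closure of $R_\pi$, $R_{\psi?}=\{(w,w):M,w\models\psi\}$; $M,w\not\models\bot$, $M,w\models p$ iff $p\in V(w)$, $\to$ classical, $M,w\models[\pi]\varphi$ iff $\varphi$ holds at all $v$ with $wR_\pi v$, $M,w\models[\pi]^{\leftarrow}\varphi$ iff $\varphi$ holds at all $v$ with $vR_\pi w$. A sequent is a pair of finite sets of formulas; valid means in every model at every state where all of $\Gamma$ hold, some formula of $\Delta$ holds. Common rules (premises / conclusion): (Ax) / $\Gamma\Rightarrow\Delta$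 with $\Gamma\cap\Delta\neq\emptyset$; ($\bot$) / $\Gamma,\bot\Rightarrow\Delta$; ($\to$L) $\Gamma\Rightarrow\varphi,\Delta$ and $\Gamma,\psi\Rightarrow\Delta$ / $\Gamma,\varphi\to\psi\Rightarrow\Delta$; ($\to$R) $\Gamma,\varphi\Rightarrow\psi,\Delta$ / $\Gamma\Rightarrow\varphi\to\psi,\Delta$; (Wk) $\Gamma\Rightarrow\Delta$ / $\Gamma'\Rightarrow\Delta'$, $\Gamma\subseteq\Gamma'$, $\Delta\subseteq\Delta'$; (Cut) $\Gamma\Rightarrow\varphi,\Delta$ and $\Gamma,\varphi\Rightarrow\Delta$ / $\Gamma\Rightarrow\Delta$; ($[\,]$) $\Gamma\Rightarrow\varphi,[\pi]^{\leftarrow}\Delta$ / $[\pi]\Gamma\Rightarrow[\pi]\varphi,\Delta$; ($[\,]^{\leftarrow}$) $\Gamma\Rightarrow\varphi,[\pi]\Delta$ / $[\pi]^{\leftarrow}\Gamma\Rightarrow[\pi]^{\leftarrow}\varphi,\Delta$; ($[;]$L) $\Gamma,[\pi_0][\pi_1]\varphi\Rightarrow\Delta$ / $\Gamma,[\pi_0;\pi_1]\varphi\Rightarrow\Delta$; ($[;]$R) $\Gamma\Rightarrow[\pi_0][\pi_1]\varphi,\Delta$ / $\Gamma\Rightarrow[\pi_0;\pi_1]\varphi,\Delta$; ($[\cup]$L) $\Gamma,[\pi_0]\varphi,[\pi_1]\varphi\Rightarrow\Delta$ / $\Gamma,[\pi_0\cup\pi_1]\varphi\Rightarrow\Delta$;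 ($[\cup]$R) $\Gamma\Rightarrow\Delta,[\pi_0]\varphi$ and $\Gamma\Rightarrow\Delta,[\pi_1]\varphi$ / $\Gamma\Rightarrow[\pi_0\cup\pi_1]\varphi,\Delta$; ($[*]$L) $\Gamma,\varphi,[\pi][\pi^*]\varphi\Rightarrow\Delta$ / $\Gamma,[\pi^*]\varphi\Rightarrow\Delta$; ($[?]$L) $\Gamma\Rightarrow\varphi,\Delta$ and $\Gamma,\psi\Rightarrow\Delta$ / $\Gamma,[\varphi?]\psi\Rightarrow\Delta$; ($[?]$R) $\Gamma,\varphi\Rightarrow\psi,\Delta$ / $\Gamma\Rightarrow[\varphi?]\psi,\Delta$. $\mathtt{GTPDL}$ = common rules plus ($[*]$R) $\Gamma,\varphi\Rightarrow[\pi]\varphi$ / $[\pi^*]\Gamma,\varphi\Rightarrow[\pi^*]\varphi$; a $\mathtt{GTPDL}$ proof is a finite tree of sequents each node concluding a rule instance with its children as premises (leaves are Ax/$\bot$). $\mathtt{CGTPDL}$ = common rules plus (C-s) $\Gamma\Rightarrow\varphi,\Delta$ and $\Gamma\Rightarrow[\pi][\pi^*]\varphi,\Delta$ / $\Gamma\Rightarrow[\pi^*]\varphi,\Delta$. $\mathtt{CGTPDL}$ proofs: a pre-proof is a finite tree of sequents built from rule instances whose leaves are Ax/$\bot$ instances or buds, together with an assignment to each bud of a companion, an inner node with the same sequent; the derivation graph identifies each bud with its companion; a path is a sequence of nodes each a premise of the previous one's rule instance. A trace following a path $(\Gamma_i\Rightarrow\Delta_i)$ is a sequence $(\tau_i)$,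 $\tau_i\in\Delta_i$, such that: at ($\to$R) with principal $\varphi\to\psi$, $\tau_{i+1}=\tau_i$ or ($\tau_i=\varphi\to\psi$ and $\tau_{i+1}=\psi$); at ($[\,]$) with principal $[\pi]\varphi$, $\tau_i=[\pi]\varphi$, $\tau_{i+1}=\varphi$; at ($[\,]^{\leftarrow}$) with principal $[\pi]^{\leftarrow}\varphi$, $\tau_i=[\pi]^{\leftarrow}\varphi$, $\tau_{i+1}=\varphi$; at ($[;]$R), $\tau_{i+1}=\tau_i$ or $\tau_i=[\pi_0;\pi_1]\varphi$ (principal) and $\tau_{i+1}=[\pi_0][\pi_1]\varphi$; at ($[\cup]$R) going to the premise with $[\pi_j]\varphi$, $\tau_{i+1}=\tau_i$ or $\tau_i$ principal and $\tau_{i+1}=[\pi_j]\varphi$; at ($[?]$R), $\tau_{i+1}=\tau_i$ or $\tau_i=[\varphi?]\psi$ principal and $\tau_{i+1}=\psi$; at (C-s) with principal $[\pi^*]\varphi$, going to the first premise, $\tau_{i+1}=\tau_i$ or ($\tau_i=[\pi^*]\varphi$, $\tau_{i+1}=\varphi$); going to the second premise, $\tau_{i+1}=\tau_i$ or ($\tau_i=[\pi^*]\varphi$, $\tau_{i+1}=[\pi][\pi^*]\varphi$, a progress point); all other rules $\tau_{i+1}=\tau_i$. Global trace condition: every infinite path has a tail followed by a trace with infinitely many progress points. A $\mathtt{CGTPDL}$ proof is a pre-proof satisfying the global trace condition. *)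

From Stdlib Require Import List Relations.
Import ListNotations.
Set Implicit Arguments.

Section TPDL.
Variables (P A : Type).

Inductive form : Type :=
| Bot : form
| Var : P -> form
| Imp : form -> form -> form
| Box : prog -> form -> form
| BoxC : prog -> form -> form
with prog : Type :=
| Atom : A -> prog
| Seq : prog -> prog -> prog
| Cup : prog -> prog -> prog
| Star : prog -> prog
| Test : form -> prog.

Record model : Type := Model {
  mW : Type;
  mR : A -> mW -> mW -> Prop;
  mV : mW -> P -> Prop }.

Fixpoint sat (M : model) (w : mW M) (f : form) {struct f} : Prop :=
  match f with
  | Bot => False
  | Var p => mV M w p
  | Imp f1 f2 => sat M w f1 -> sat M w f2
  | Box pi f1 => forall v, rel M pi w v -> sat M v f1
  | BoxC pi f1 => forall v, rel M pi v w -> sat M v f1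
  end
with rel (M : model) (pi : prog) (w v : mW M) {struct pi} : Prop :=
  match pi with
  | Atom a => mR M a w v
  | Seq p0 p1 => exists u, rel M p0 w u /\ rel M p1 u v
  | Cup p0 p1 => rel M p0 w v \/ rel M p1 w v
  | Star p => clos_refl_trans (mW M) (fun x y => rel M p x y) w v
  | Test f1 => w = v /\ sat M w f1
  end.

(* A sequent is a pair of finite sets of formulas, represented by lists;
   lists are only ever compared up to having the same elements. *)
Definition sequent : Type := (list form * list form)%type.

Definition seteq (l1 l2 : list form) : Prop := forall x, In x l1 <-> In x l2.
Definition seqeq (s1 s2 : sequent) : Prop :=
  seteq (fst s1) (fst s2) /\ seteq (snd s1) (snd s2).

Definition valid (s : sequent) : Prop :=
  forall (M : model) (w : mW M),
    (forall f, In f (fst s) -> sat M w f) ->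
    exists f, In f (snd s) /\ sat M w f.

Inductive rule : Type :=
| RAx (G D : list form)
| RBot (G D : list form)
| RImpL (G D : list form) (f g : form)
| RImpR (G D : list form) (f g : form)
| RWk (G D G' D' : list form)
| RCut (G D : list form) (f : form)
| RBox (G D : list form) (p : prog) (f : form)
| RBoxC (G D : list form) (p : prog) (f : form)
| RSeqL (G D : list form) (p0 p1 : prog) (f : form)
| RSeqR (G D : list form) (p0 p1 : prog) (f : form)
| RCupL (G D : list form) (p0 p1 : prog) (f : form)
| RCupR (G D : list form) (p0 p1 : prog) (f : form)
| RStarL (G D : list form) (p : prog) (f : form)
| RTestL (G D : list form) (f g : form)
| RTestR (G D : list form) (f g : form)
| RStarR (G : list form) (p : prog) (f : form)
| RCs (G D : list form) (p : prog) (f : form).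

Definition side (r : rule) : Prop :=
  match r with
  | RAx G D => exists f, In f G /\ In f D
  | RWk G D G' D' => incl G G' /\ incl D D'
  | _ => True
  end.

Definition concl (r : rule) : sequent :=
  match r with
  | RAx G D => (G, D)
  | RBot G D => (Bot :: G, D)
  | RImpL G D f g => (Imp f g :: G, D)
  | RImpR G D f g => (G, Imp f g :: D)
  | RWk _ _ G' D' => (G', D')
  | RCut G D _ => (G, D)
  | RBox G D p f => (map (Box p) G, Box p f :: D)
  | RBoxC G D p f => (map (BoxC p) G, BoxC p f :: D)
  | RSeqL G D p0 p1 f => (Box (Seq p0 p1) f :: G, D)
  | RSeqR G D p0 p1 f => (G, Box (Seq p0 p1) f :: D)
  | RCupL G D p0 p1 f => (Box (Cup p0 p1) f :: G, D)
  | RCupR G D p0 p1 f => (G, Box (Cup p0 p1) f :: D)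
  | RStarL G D p f => (Box (Star p) f :: G, D)
  | RTestL G D f g => (Box (Test f) g :: G, D)
  | RTestR G D f g => (G, Box (Test f) g :: D)
  | RStarR G p f => (f :: map (Box (Star p)) G, [Box (Star p) f])
  | RCs G D p f => (G, Box (Star p) f :: D)
  end.

Definition prems (r : rule) : list sequent :=
  match r with
  | RAx _ _ => []
  | RBot _ _ => []
  | RImpL G D f g => [(G, f :: D); (g :: G, D)]
  | RImpR G D f g => [(f :: G, g :: D)]
  | RWk G D _ _ => [(G, D)]
  | RCut G D f => [(G, f :: D); (f :: G, D)]
  | RBox G D p f => [(G, f :: map (BoxC p) D)]
  | RBoxC G D p f => [(G, f :: map (Box p) D)]
  | RSeqL G D p0 p1 f => [(Box p0 (Box p1 f) :: G, D)]
  | RSeqR G D p0 p1 f => [(G, Box p0 (Box p1 f) :: D)]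
  | RCupL G D p0 p1 f => [(Box p0 f :: Box p1 f :: G, D)]
  | RCupR G D p0 p1 f => [(G, Box p0 f :: D); (G, Box p1 f :: D)]
  | RStarL G D p f => [(f :: Box p (Box (Star p) f) :: G, D)]
  | RTestL G D f g => [(G, f :: D); (g :: G, D)]
  | RTestR G D f g => [(f :: G, g :: D)]
  | RStarR G p f => [(f :: G, [Box p f])]
  | RCs G D p f => [(G, f :: D); (G, Box p (Box (Star p) f) :: D)]
  end.

Definition common_rule (r : rule) : Prop :=
  match r with RStarR _ _ _ | RCs _ _ _ _ => False | _ => True end.
Definition gtpdl_rule (r : rule) : Prop :=
  common_rule r \/ match r with RStarR _ _ _ => True | _ => False end.
Definition cgtpdl_rule (r : rule) : Prop :=
  common_rule r \/ match r with RCs _ _ _ _ => True | _ => False end.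

Inductive gprovable : sequent -> Prop :=
| gp_node : forall (r : rule) (s : sequent),
    gtpdl_rule r -> side r -> seqeq s (concl r) ->
    (forall s', In s' (prems r) -> gprovable s') ->
    gprovable s.

(* A finite tree: inner nodes carry their sequent, their rule instance and
   their children (one per premise, in order); buds carry their sequent and
   the address (list of child indices from the root) of their companion. *)
Inductive ptree : Type :=
| PNode (s : sequent) (r : rule) (ts : list ptree)
| PBud (s : sequent) (companion : list nat).

Definition label (t : ptree) : sequent :=
  match t with PNode s _ _ => s | PBud s _ => s end.

Fixpoint subtree (t : ptree) (a : list nat) : option ptree :=
  match a with
  | [] => Some t
  | k :: a' =>
      match t with
      | PNode _ _ ts =>
          match nth_error ts k with Some t' => subtree t' a' | None => None end
      | PBud _ _ => None
      end
  end.

Definition preproof (t : ptree) : Prop :=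
  (forall a s r ts, subtree t a = Some (PNode s r ts) ->
     cgtpdl_rule r /\ side r /\ seqeq s (concl r) /\
     length ts = length (prems r) /\
     (forall k t' s', nth_error ts k = Some t' -> nth_error (prems r) k = Some s' ->
        seqeq (label t') s')) /\
  (forall a s c, subtree t a = Some (PBud s c) ->
     exists s' r ts, subtree t c = Some (PNode s' r ts) /\ seqeq s s').

(* Derivation graph (buds identified with their companions): an edge from the
   inner node at address a, through its k-th premise, to the node at b. *)
Definition edge (t : ptree) (a : list nat) (k : nat) (b : list nat) : Prop :=
  exists s r ts t', subtree t a = Some (PNode s r ts) /\ nth_error ts k = Some t' /\
    match t' with
    | PNode _ _ _ => b = a ++ [k]
    | PBud _ c => b = c
    end.

Definition tstep (r : rule) (k : nat) (x y : form) : Prop :=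
  match r with
  | RImpR _ _ f g => y = x \/ (x = Imp f g /\ y = g)
  | RBox _ _ p f => x = Box p f /\ y = f
  | RBoxC _ _ p f => x = BoxC p f /\ y = f
  | RSeqR _ _ p0 p1 f => y = x \/ (x = Box (Seq p0 p1) f /\ y = Box p0 (Box p1 f))
  | RCupR _ _ p0 p1 f =>
      y = x \/ (x = Box (Cup p0 p1) f /\ y = Box (match k with 0 => p0 | _ => p1 end) f)
  | RTestR _ _ f g => y = x \/ (x = Box (Test f) g /\ y = g)
  | RCs _ _ p f =>
      y = x \/ (x = Box (Star p) f /\
                y = match k with 0 => f | _ => Box p (Box (Star p) f) end)
  | _ => y = x
  end.

Definition progress (r : rule) (k : nat) (x y : form) : Prop :=
  match r with
  | RCs _ _ p f => k = 1 /\ x = Box (Star p) f /\ y = Box p (Box (Star p) f)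
  | _ => False
  end.

Definition global_trace_condition (t : ptree) : Prop :=
  forall (pth : nat -> list nat) (ks : nat -> nat),
    (forall i, edge t (pth i) (ks i) (pth (S i))) ->
    exists (n : nat) (tau : nat -> form),
      (forall i, n <= i -> exists s r ts,
          subtree t (pth i) = Some (PNode s r ts) /\
          In (tau i) (snd s) /\ tstep r (ks i) (tau i) (tau (S i))) /\
      (forall m, exists i, m <= i /\ n <= i /\
          exists s r ts, subtree t (pth i) = Some (PNode s r ts) /\
            progress r (ks i) (tau i) (tau (S i))).

Definition cprovable (s : sequent) : Prop :=
  exists t : ptree, preproof t /\ global_trace_condition t /\ seqeq (label t) s.

End TPDL.

(* For a formula [[pi]phi] failing at a state, its rank is the least number of
   star unfoldings on a [pi]-path to a state refuting [phi].  Every rule instance with a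
   falsified conclusion has a falsified premise along which the ranks of traced formulas do
   not increase, and unfolding [[p*]phi] by (C-s) strictly decreases the rank.  A falsified
   root of a cyclic proof would thus yield an infinite path whose progressing trace carries an
   infinitely descending sequence of natural numbers.

   It is proved for GTPDL with ([*]R) restricted to an empty context, by a
   canonical model whose states are the consistent partitions of the Fischer-Ladner closure
   of the sequent.  Converse boxes of compound programs are handled by rules derived from the
   tense interaction of [pi] and [pi]^<-; for stars, the disjunction of the characteristic
   formulas of all reachable states is an invariant for the induction rule.  This fragment
   embeds into GTPDL, and into CGTPDL by replacing each induction step with a cycle through
   (C-s). *)

From Pilot Require Import Defs.
From Stdlib Require Import List Relations Classical ClassicalEpsilon Lia Arith.
Import ListNotations.

Arguments Atom {P A} _.
Arguments Var {P A} _.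
Arguments Bot {P A}.

Section SequentEquality.
Context {P A : Type}.

Lemma seqeq_refl (s : sequent P A) : seqeq s s.
Proof. split; intro; reflexivity. Qed.

Lemma seqeq_sym (s1 s2 : sequent P A) : seqeq s1 s2 -> seqeq s2 s1.
Proof. intros [H1 H2]; split; intro x; symmetry; auto. Qed.

Lemma seqeq_trans (s1 s2 s3 : sequent P A) : seqeq s1 s2 -> seqeq s2 s3 -> seqeq s1 s3.
Proof. intros [H1 H2] [H3 H4]; split; intro x; [rewrite (H1 x)|rewrite (H2 x)]; auto. Qed.
End SequentEquality.

(** * Soundness *)

Section LocalSoundness.
Context {P A : Type}.
Notation form := (form P A).
Notation prog := (prog P A).
Notation model := (model P A).
Notation sequent := (sequent P A).

Definition falsifies (M : model) (w : mW M) (s : sequent) : Prop :=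
  (forall f, In f (fst s) -> sat M w f) /\ (forall f, In f (snd s) -> ~ sat M w f).

Lemma valid_iff_unfalsifiable (s : sequent) : valid s <-> forall M w, ~ falsifies M w s.
Proof.
  split.
  - intros Hv M w [HG HD]. destruct (Hv M w HG) as [f [Hf Hs]]. exact (HD f Hf Hs).
  - intros H M w HG. apply NNPP. intro Hn. apply (H M w). split; [exact HG|].
    intros f Hf Hs. apply Hn. exists f; auto.
Qed.

Lemma falsifies_seqeq M w (s1 s2 : sequent) : seqeq s1 s2 -> falsifies M w s1 -> falsifies M w s2.
Proof. intros [E1 E2] [HG HD]; split; intros f Hf; [apply HG, E1|apply HD, E2]; exact Hf. Qed.

Inductive rstar {W : Type} (Rn : W -> W -> nat -> Prop) : W -> W -> nat -> Prop :=
| rstar_refl w : rstar Rn w w 0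
| rstar_step w u v k1 k2 : Rn w u k1 -> rstar Rn u v k2 -> rstar Rn w v (S (k1 + k2)).

Fixpoint rrel (M : model) (p : prog) : mW M -> mW M -> nat -> Prop :=
  match p with
  | Atom a => fun w v n => mR M a w v /\ n = 0
  | Seq p q => fun w v n => exists u n1 n2, rrel M p w u n1 /\ rrel M q u v n2 /\ n = n1 + n2
  | Cup p q => fun w v n => rrel M p w v n \/ rrel M q w v n
  | Star p => rstar (rrel M p)
  | Test f => fun w v n => w = v /\ sat M w f /\ n = 0
  end.

Lemma rel_iff_rrel M p : forall w v, rel M p w v <-> exists n, rrel M p w v n.
Proof.
  induction p as [a|p IHp q IHq|p IHp q IHq|p IHp|f]; intros w v; simpl.
  - split; [intro H; exists 0; auto|intros [n [H _]]; exact H].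
  - split.
    + intros [u [H1 H2]]. apply IHp in H1 as [n1 H1]. apply IHq in H2 as [n2 H2].
      exists (n1 + n2), u, n1, n2; auto.
    + intros [n [u [n1 [n2 [H1 [H2 _]]]]]]. exists u; split; [apply IHp|apply IHq]; eauto.
  - rewrite IHp, IHq. split.
    + intros [[n H]|[n H]]; exists n; auto.
    + intros [n [H|H]]; [left|right]; exists n; auto.
  - split.
    + intro H. apply clos_rt_rt1n in H. induction H as [w|w u v Hwu _ [n Hn]].
      * exists 0; constructor.
      * apply IHp in Hwu as [k Hk]. exists (S (k + n)). econstructor; eauto.
    + intros [n H]. induction H as [w|w u v k1 k2 Hwu _ IH]; [apply rt_refl|].
      apply rt_trans with u; [apply rt_step, IHp; eauto|exact IH].
  - split; [intros [-> H]; exists 0; auto|intros [n [-> [H _]]]; auto].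
Qed.

Fixpoint refute (M : model) (f : form) : mW M -> nat -> Prop :=
  match f with
  | Bot => fun w n => n = 0
  | Var q => fun w n => ~ mV M w q /\ n = 0
  | Imp f g => fun w n => sat M w f /\ refute M g w n
  | Box p g => fun w n => exists v k j, rrel M p w v k /\ refute M g v j /\ n = k + j
  | BoxC p g => fun w n => exists v k j, rrel M p v w k /\ refute M g v j /\ n = k + j
  end.

Lemma not_sat_iff_refute M f : forall w, ~ sat M w f <-> exists n, refute M f w n.
Proof.
  induction f as [|q|f _ g IHg|p g IHg|p g IHg]; intro w; simpl.
  - split; [exists 0; reflexivity|tauto].
  - split; [intro H; exists 0; auto|intros [n [H _]]; exact H].
  - split.
    + intro H. assert (Hg : ~ sat M w g) by tauto.
      apply IHg in Hg as [n Hn]. exists n. split; [tauto|exact Hn].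
    + intros [n [Hf Hn]] H. apply (proj2 (IHg w)); eauto.
  - split.
    + intro H. apply not_all_ex_not in H as [v Hv]. apply imply_to_and in Hv as [H1 H2].
      apply rel_iff_rrel in H1 as [k Hk]. apply IHg in H2 as [j Hj].
      exists (k + j), v, k, j; auto.
    + intros [n [v [k [j [H1 [H2 _]]]]]] H.
      apply (proj2 (IHg v)); [eauto|]. apply H, rel_iff_rrel; eauto.
  - split.
    + intro H. apply not_all_ex_not in H as [v Hv]. apply imply_to_and in Hv as [H1 H2].
      apply rel_iff_rrel in H1 as [k Hk]. apply IHg in H2 as [j Hj].
      exists (k + j), v, k, j; auto.
    + intros [n [v [k [j [H1 [H2 _]]]]]] H.
      apply (proj2 (IHg v)); [eauto|]. apply H, rel_iff_rrel; eauto.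
Qed.

Definition least_refutation M f w n : Prop :=
  refute M f w n /\ forall m, refute M f w m -> n <= m.

(* Junk when [f] holds at [w]. *)
Definition rank M f w : nat := epsilon (inhabits 0) (least_refutation M f w).

Lemma rank_spec M f w : ~ sat M w f -> least_refutation M f w (rank M f w).
Proof.
  intro H. unfold rank. apply epsilon_spec. apply not_sat_iff_refute in H.
  destruct (dec_inh_nat_subset_has_unique_least_element _ (fun n => classic _) H)
    as [n [Hn _]].
  exists n. exact Hn.
Qed.

Lemma refute_rank_le M f w n : refute M f w n -> ~ sat M w f /\ rank M f w <= n.
Proof.
  intro H. assert (Hf : ~ sat M w f) by (apply not_sat_iff_refute; eauto).
  split; [exact Hf|]. apply (rank_spec M f w Hf), H.
Qed.

Lemma refute_rank M f w : ~ sat M w f -> refute M f w (rank M f w).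
Proof. intro H. apply (rank_spec M f w H). Qed.

Lemma refute_seq M p q f w n :
  refute M (Box (Seq p q) f) w n -> refute M (Box p (Box q f)) w n.
Proof.
  intros [v [k [j [[u [n1 [n2 [H1 [H2 ->]]]]] [Hj ->]]]]].
  exists u, n1, (n2 + j). split; [exact H1|]. split; [|lia]. exists v, n2, j; auto.
Qed.

Lemma refute_cup M p q f w n :
  refute M (Box (Cup p q) f) w n -> refute M (Box p f) w n \/ refute M (Box q f) w n.
Proof. intros [v [k [j [[H|H] [Hj ->]]]]]; [left|right]; exists v, k, j; auto. Qed.

Lemma refute_test M g f w n : refute M (Box (Test g) f) w n -> sat M w g /\ refute M f w n.
Proof. intros [v [k [j [[<- [Hg ->]] [Hj ->]]]]]. auto. Qed.

Lemma refute_box M p f w n :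
  refute M (Box p f) w n -> exists v m, rel M p w v /\ refute M f v m /\ m <= n.
Proof.
  intros [v [k [j [Hk [Hj ->]]]]]. exists v, j.
  split; [apply rel_iff_rrel; eauto|split; [exact Hj|lia]].
Qed.

Lemma refute_boxC M p f w n :
  refute M (BoxC p f) w n -> exists v m, rel M p v w /\ refute M f v m /\ m <= n.
Proof.
  intros [v [k [j [Hk [Hj ->]]]]]. exists v, j.
  split; [apply rel_iff_rrel; eauto|split; [exact Hj|lia]].
Qed.

(* Unfolding a star consumes one iteration: this is why (C-s) makes progress. *)
Lemma refute_star M p f w n :
  refute M (Box (Star p) f) w n ->
  refute M f w n \/ exists m, m < n /\ refute M (Box p (Box (Star p) f)) w m.
Proof.
  intros [v [k [j [Hk [Hj ->]]]]]. destruct Hk as [w|w u v k1 k2 H1 H2].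
  - left. exact Hj.
  - right. exists (k1 + (k2 + j)). split; [lia|].
    exists u, k1, (k2 + j). split; [exact H1|]. split; [|reflexivity]. exists v, k2, j; auto.
Qed.

Definition descends M (r : rule P A) k (w w' : mW M) (s' : sequent) : Prop :=
  forall x y, In x (snd (concl r)) -> In y (snd s') -> tstep r k x y ->
    rank M y w' <= rank M x w /\ (progress r k x y -> rank M y w' < rank M x w).

Lemma descends_refl M (r : rule P A) k w s' :
  (forall x y, tstep r k x y -> y = x) -> (forall x y, ~ progress r k x y) ->
  descends M r k w w s'.
Proof.
  intros Ht Hp x y _ _ H. apply Ht in H as ->. split; [reflexivity|intro H; elim (Hp _ _ H)].
Qed.

Lemma descends_unfold M (r : rule P A) k w s' a b :
  (forall x y, tstep r k x y -> y = x \/ (x = a /\ y = b)) -> (forall x y, ~ progress r k x y) ->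
  rank M b w <= rank M a w -> descends M r k w w s'.
Proof.
  intros Ht Hp Hab x y _ _ H. split; [|intro H'; elim (Hp _ _ H')].
  destruct (Ht _ _ H) as [->|[-> ->]]; auto.
Qed.

Lemma descends_modal M (r : rule P A) w v s' a b :
  (forall x y, tstep r 0 x y -> x = a /\ y = b) -> (forall x y, ~ progress r 0 x y) ->
  rank M b v <= rank M a w -> descends M r 0 w v s'.
Proof.
  intros Ht Hp Hab x y _ _ H. split; [|intro H'; elim (Hp _ _ H')].
  destruct (Ht _ _ H) as [-> ->]; exact Hab.
Qed.

Lemma Box_neq (p : prog) (f : form) : Box p f <> f.
Proof. induction f; try discriminate. intro H. injection H as -> H. auto. Qed.

Ltac premise k := exists k; eexists; split; [reflexivity|split; [split; simpl|]].
Ltac premise_at k w := exists k; eexists; exists w; split; [reflexivity|split; [split; simpl|]].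
Ltac trivial_trace := apply descends_refl; simpl; auto.

Definition right_rule (r : rule P A) : Prop :=
  match r with
  | RImpR _ _ _ _ | RBox _ _ _ _ | RBoxC _ _ _ _ | RSeqR _ _ _ _ _ | RCupR _ _ _ _ _
  | RTestR _ _ _ _ | RCs _ _ _ _ => True
  | _ => False
  end.

Lemma falsified_premise_left M w (r : rule P A) :
  cgtpdl_rule r -> ~ right_rule r -> side r -> falsifies M w (concl r) ->
  exists k s', nth_error (prems r) k = Some s' /\ falsifies M w s' /\ descends M r k w w s'.
Proof.
  intros Hrule Hleft Hside [HG HD].
  destruct r as [G D|G D|G D f g|G D f g|G D G' D'|G D f|G D p f|G D p f|G D p q f|G D p q f
    |G D p q f|G D p q f|G D p f|G D f g|G D f g|G p f|G D p f]; simpl in *;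
    try (elim Hleft; exact I).
  - destruct Hside as [f [Hf1 Hf2]]. elim (HD f Hf2 (HG f Hf1)).
  - elim (HG Bot (or_introl eq_refl)).
  - assert (Hi := HG _ (or_introl eq_refl)). simpl in Hi.
    destruct (classic (sat M w f)) as [Hf|Hf].
    + premise 1; [intros x [<-|Hx]; auto|auto|trivial_trace].
    + premise 0; [auto|intros x [<-|Hx]; auto|trivial_trace].
  - destruct Hside as [I1 I2]. premise 0; auto. trivial_trace.
  - destruct (classic (sat M w f)) as [Hf|Hf].
    + premise 1; [intros x [<-|Hx]; auto|auto|trivial_trace].
    + premise 0; [auto|intros x [<-|Hx]; auto|trivial_trace].
  - assert (Hi := HG _ (or_introl eq_refl)). simpl in Hi.
    premise 0; [|auto|trivial_trace].
    intros x [<-|Hx]; [|auto]. simpl. intros u Hu v Hv. apply Hi. eauto.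
  - assert (Hi := HG _ (or_introl eq_refl)). simpl in Hi.
    premise 0; [|auto|trivial_trace].
    intros x [<-|[<-|Hx]]; auto; simpl; intros v Hv; apply Hi; auto.
  - assert (Hi := HG _ (or_introl eq_refl)). simpl in Hi.
    premise 0; [|auto|trivial_trace].
    intros x [<-|[<-|Hx]]; auto.
    + apply Hi, rt_refl.
    + simpl. intros u Hu v Hv. apply Hi. apply rt_trans with u; [apply rt_step|]; assumption.
  - assert (Hi := HG _ (or_introl eq_refl)). simpl in Hi.
    destruct (classic (sat M w f)) as [Hf|Hf].
    + premise 1; [intros x [<-|Hx]; auto|auto|trivial_trace].
    + premise 0; [auto|intros x [<-|Hx]; auto|trivial_trace].
  - destruct Hrule as [[]|[]].
Qed.

Lemma box_premise_falsified M w G D p f :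
  falsifies M w (concl (RBox G D p f)) ->
  exists k s' v, nth_error (prems (RBox G D p f)) k = Some s' /\ falsifies M v s' /\
    descends M (RBox G D p f) k w v s'.
Proof.
  intros [HG HD]. simpl in *.
  destruct (refute_box _ _ _ _ _ (refute_rank M _ w (HD _ (or_introl eq_refl))))
    as [v [m [Hr [Hm Hle]]]].
  destruct (refute_rank_le _ _ _ _ Hm) as [Hf Hle'].
  premise_at 0 v.
  - intros x Hx. apply (HG (Box p x)); [apply in_map; exact Hx|exact Hr].
  - intros x [<-|Hx]; [exact Hf|]. apply in_map_iff in Hx as [g [<- Hg]].
    intro H. apply (HD g); [right; exact Hg|]. exact (H w Hr).
  - apply (descends_modal _ _ _ _ _ (Box p f) f); simpl; auto. lia.
Qed.

Lemma boxC_premise_falsified M w G D p f :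
  falsifies M w (concl (RBoxC G D p f)) ->
  exists k s' v, nth_error (prems (RBoxC G D p f)) k = Some s' /\ falsifies M v s' /\
    descends M (RBoxC G D p f) k w v s'.
Proof.
  intros [HG HD]. simpl in *.
  destruct (refute_boxC _ _ _ _ _ (refute_rank M _ w (HD _ (or_introl eq_refl))))
    as [v [m [Hr [Hm Hle]]]].
  destruct (refute_rank_le _ _ _ _ Hm) as [Hf Hle'].
  premise_at 0 v.
  - intros x Hx. apply (HG (BoxC p x)); [apply in_map; exact Hx|exact Hr].
  - intros x [<-|Hx]; [exact Hf|]. apply in_map_iff in Hx as [g [<- Hg]].
    intro H. apply (HD g); [right; exact Hg|]. exact (H w Hr).
  - apply (descends_modal _ _ _ _ _ (BoxC p f) f); simpl; auto. lia.
Qed.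

Lemma falsified_premise_right M w (r : rule P A) :
  right_rule r -> falsifies M w (concl r) ->
  exists k s' w', nth_error (prems r) k = Some s' /\ falsifies M w' s' /\ descends M r k w w' s'.
Proof.
  intros Hright [HG HD].
  destruct r as [G D|G D|G D f g|G D f g|G D G' D'|G D f|G D p f|G D p f|G D p q f|G D p q f
    |G D p q f|G D p q f|G D p f|G D f g|G D f g|G p f|G D p f]; simpl in *;
    try (elim Hright);
    assert (Hrank := refute_rank M _ w (HD _ (or_introl eq_refl))).
  - destruct Hrank as [Hf Hg]. destruct (refute_rank_le _ _ _ _ Hg) as [Hg' Hle].
    premise_at 0 w; [intros x [<-|Hx]; auto|intros x [<-|Hx]; auto|].
    apply (descends_unfold _ _ _ _ _ (Imp f g) g); simpl; auto.
  - exact (box_premise_falsified M w G D p f (conj HG HD)).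
  - exact (boxC_premise_falsified M w G D p f (conj HG HD)).
  - destruct (refute_rank_le _ _ _ _ (refute_seq _ _ _ _ _ _ Hrank)) as [Hf Hle].
    premise_at 0 w; [auto|intros x [<-|Hx]; auto|].
    apply (descends_unfold _ _ _ _ _ (Box (Seq p q) f) (Box p (Box q f))); simpl; auto.
  - destruct (refute_cup _ _ _ _ _ _ Hrank) as [Hc|Hc];
      destruct (refute_rank_le _ _ _ _ Hc) as [Hf Hle].
    + premise_at 0 w; [auto|intros x [<-|Hx]; auto|].
      apply (descends_unfold _ _ _ _ _ (Box (Cup p q) f) (Box p f)); simpl; auto.
    + premise_at 1 w; [auto|intros x [<-|Hx]; auto|].
      apply (descends_unfold _ _ _ _ _ (Box (Cup p q) f) (Box q f)); simpl; auto.
  - destruct (refute_test _ _ _ _ _ Hrank) as [Hf Hg].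
    destruct (refute_rank_le _ _ _ _ Hg) as [Hg' Hle].
    premise_at 0 w; [intros x [<-|Hx]; auto|intros x [<-|Hx]; auto|].
    apply (descends_unfold _ _ _ _ _ (Box (Test f) g) g); simpl; auto.
  - destruct (refute_star _ _ _ _ _ Hrank) as [Hf|[m [Hlt Hm]]].
    + destruct (refute_rank_le _ _ _ _ Hf) as [Hf' Hle].
      premise_at 0 w; [auto|intros x [<-|Hx]; auto|].
      apply (descends_unfold _ _ _ _ _ (Box (Star p) f) f); simpl; auto.
      intros x y [Hk _]; discriminate.
    + destruct (refute_rank_le _ _ _ _ Hm) as [Hf' Hle].
      premise_at 1 w; [auto|intros x [<-|Hx]; auto|].
      intros x y _ _ Ht. simpl in Ht.
      destruct Ht as [->|[-> ->]]; simpl; split; [lia| |lia|intros _; lia].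
      intros [_ [-> Hy]]. exfalso. injection Hy as _ Hy. exact (Box_neq _ _ (eq_sym Hy)).
Qed.

Lemma falsified_premise M w (r : rule P A) :
  cgtpdl_rule r -> side r -> falsifies M w (concl r) ->
  exists k s' w', nth_error (prems r) k = Some s' /\ falsifies M w' s' /\ descends M r k w w' s'.
Proof.
  intros Hrule Hside Hf. destruct (classic (right_rule r)) as [Hr|Hr].
  - exact (falsified_premise_right M w r Hr Hf).
  - destruct (falsified_premise_left M w r Hrule Hr Hside Hf) as [k [s' [Hk [Hs' Hd]]]].
    exists k, s', w. auto.
Qed.
End LocalSoundness.

Lemma dependent_choice {X : Type} (Q : X -> Prop) (R : X -> X -> Prop) :
  (forall x, Q x -> exists y, Q y /\ R x y) ->
  forall x0, Q x0 -> exists f : nat -> X, f 0 = x0 /\ forall i, R (f i) (f (S i)).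
Proof.
  intros Hstep x0 H0.
  assert (next : forall x : {x | Q x}, {y : {y | Q y} | R (proj1_sig x) (proj1_sig y)}).
  { intros [x Hx]. destruct (constructive_indefinite_description _ (Hstep x Hx)) as [y [Hy Hr]].
    exists (exist _ y Hy). exact Hr. }
  exists (fun i => proj1_sig (Nat.iter i (fun x => proj1_sig (next x)) (exist _ x0 H0))).
  split; [reflexivity|]. intro i. simpl. apply (proj2_sig (next _)).
Qed.

Lemma no_infinite_descent (a : nat -> nat) n :
  (forall i, n <= i -> a (S i) <= a i) ->
  ~ (forall m, exists i, m <= i /\ n <= i /\ a (S i) < a i).
Proof.
  intros Hle Hlt.
  assert (Hmono : forall d i, n <= i -> a (d + i) <= a i).
  { induction d; intros i Hi; simpl; [lia|]. specialize (Hle (d + i)). specialize (IHd i Hi). lia. }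
  assert (Hdrop : forall m, exists i, n <= i /\ a i + m <= a n).
  { induction m as [|m [i [Hi Ha]]]; [exists n; lia|].
    destruct (Hlt i) as [j [Hij [Hnj Hj]]]. exists (S j). split; [lia|].
    specialize (Hmono (j - i) i Hi). replace (j - i + i) with j in Hmono by lia. lia. }
  destruct (Hdrop (S (a n))) as [i [_ Hi]]. lia.
Qed.

Lemma preproof_root {P A} (t : ptree P A) : preproof t -> exists s r ts, t = PNode s r ts.
Proof.
  intros [_ Hbud]. destruct t as [s r ts|s c]; [eauto|].
  destruct (Hbud [] s c eq_refl) as [s' [r' [ts' [E _]]]]. destruct c; discriminate.
Qed.

Lemma subtree_app {P A} (t : ptree P A) a b :
  subtree t (a ++ b) = match subtree t a with Some t1 => subtree t1 b | None => None end.
Proof.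
  revert t; induction a as [|k a IH]; intro t; simpl; [reflexivity|].
  destruct t as [s r ts|s c]; [|reflexivity]. destruct (nth_error ts k); [apply IH|reflexivity].
Qed.

Section CyclicSoundness.
Context {P A : Type} (t : ptree P A) (M : model P A).
Hypothesis Hpre : preproof t.

Definition falsified_node (a : list nat) (w : mW M) : Prop :=
  exists s r ts, subtree t a = Some (PNode s r ts) /\ falsifies M w s.

Definition descent_step (a : list nat) (w : mW M) (k : nat) (b : list nat) (w' : mW M) : Prop :=
  edge t a k b /\ falsified_node b w' /\
  forall s r ts s' r' ts', subtree t a = Some (PNode s r ts) ->
    subtree t b = Some (PNode s' r' ts') ->
    forall x y, In x (snd s) -> In y (snd s') -> tstep r k x y ->
      rank M y w' <= rank M x w /\ (progress r k x y -> rank M y w' < rank M x w).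

Lemma descent_step_exists a w : falsified_node a w -> exists k b w', descent_step a w k b w'.
Proof.
  intros [s [r [ts [Hsub Hf]]]]. destruct Hpre as [Hnode Hbud].
  destruct (Hnode _ _ _ _ Hsub) as [Hr [Hs [Heq [Hlen Hch]]]].
  destruct (falsified_premise M w r Hr Hs (falsifies_seqeq M w _ _ Heq Hf))
    as [k [s' [w' [Hk [Hf' Hdesc]]]]].
  destruct (nth_error ts k) as [t'|] eqn:Ht'.
  2:{ apply nth_error_None in Ht'. assert (k < length (prems r)) by
        (apply nth_error_Some; congruence). lia. }
  assert (Hl := Hch _ _ _ Ht' Hk).
  assert (Hsub' : subtree t (a ++ [k]) = Some t')
    by (rewrite subtree_app, Hsub; simpl; rewrite Ht'; reflexivity).
  destruct t' as [s1 r1 ts1|s1 c].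
  - exists k, (a ++ [k]), w'. split; [|split].
    + exists s, r, ts, (PNode s1 r1 ts1); auto.
    + exists s1, r1, ts1. split; [exact Hsub'|].
      exact (falsifies_seqeq M w' _ _ (seqeq_sym _ _ Hl) Hf').
    + intros s0 r0 ts0 s2 r2 ts2 E1 E2 x y Hx Hy Ht.
      rewrite Hsub in E1. injection E1 as <- <- <-. rewrite Hsub' in E2. injection E2 as <- <- <-.
      apply Hdesc; [apply Heq; exact Hx|apply Hl; exact Hy|exact Ht].
  - destruct (Hbud _ _ _ Hsub') as [s2 [r2 [ts2 [Hc Hq]]]].
    exists k, c, w'. split; [|split].
    + exists s, r, ts, (PBud s1 c); auto.
    + exists s2, r2, ts2. split; [exact Hc|].
      exact (falsifies_seqeq M w' _ _ (seqeq_trans _ _ _ (seqeq_sym _ _ Hl) Hq) Hf').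
    + intros s0 r0 ts0 s3 r3 ts3 E1 E2 x y Hx Hy Ht.
      rewrite Hsub in E1. injection E1 as <- <- <-. rewrite Hc in E2. injection E2 as <- <- <-.
      apply Hdesc; [apply Heq; exact Hx|apply Hl, Hq; exact Hy|exact Ht].
Qed.

Hypothesis Hgtc : global_trace_condition t.

(* Following falsified premises forever yields an infinite path; along the trace promised
   by the trace condition the ranks never increase and infinitely often decrease. *)
Lemma root_not_falsified w : ~ falsified_node [] w.
Proof.
  intro H0.
  destruct (dependent_choice (fun x : nat * (list nat * mW M) => falsified_node (fst (snd x))
    (snd (snd x)))
    (fun x y => descent_step (fst (snd x)) (snd (snd x)) (fst y) (fst (snd y)) (snd (snd y))))
    with (x0 := (0, (@nil nat, w))) as [f [_ Hf]]; [|exact H0|].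
  { intros [k [a v]] Ha. destruct (descent_step_exists a v Ha) as [k' [b [v' Hd]]].
    exists (k', (b, v')). split; [apply Hd|exact Hd]. }
  destruct (Hgtc (fun i => fst (snd (f i))) (fun i => fst (f (S i)))) as [n [tau [Htr Hprog]]].
  { intro i. apply Hf. }
  apply (no_infinite_descent (fun i => rank M (tau i) (snd (snd (f i)))) n).
  - intros i Hi. destruct (Htr i Hi) as [s [r [ts [E1 [Hx Ht]]]]].
    destruct (Htr (S i) ltac:(lia)) as [s' [r' [ts' [E2 [Hy _]]]]].
    destruct (Hf i) as [_ [_ Hd]]. apply (Hd _ _ _ _ _ _ E1 E2 _ _ Hx Hy Ht).
  - intro m. destruct (Hprog m) as [i [Hmi [Hni [s [r [ts [E Hp]]]]]]].
    exists i. split; [exact Hmi|]. split; [exact Hni|].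
    destruct (Htr i Hni) as [s1 [r1 [ts1 [E1 [Hx Ht]]]]].
    destruct (Htr (S i) ltac:(lia)) as [s' [r' [ts' [E2 [Hy _]]]]].
    rewrite E in E1. injection E1 as <- <- <-.
    destruct (Hf i) as [_ [_ Hd]]. apply (Hd _ _ _ _ _ _ E E2 _ _ Hx Hy Ht), Hp.
Qed.
End CyclicSoundness.

Theorem cprovable_valid {P A} (s : sequent P A) : cprovable s -> valid s.
Proof.
  intros [t [Hpre [Hgtc Hl]]]. apply valid_iff_unfalsifiable. intros M w Hf.
  destruct (preproof_root t Hpre) as [s0 [r [ts ->]]].
  apply (root_not_falsified _ M Hpre Hgtc w). exists s0, r, ts. split; [reflexivity|].
  exact (falsifies_seqeq M w _ _ (seqeq_sym _ _ Hl) Hf).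
Qed.

(* Walk along the [p*]-path to a state refuting [f]; the last state before it on which [f]
   still holds falsifies the premise. *)
Lemma star_right_falsified {P A} M (G : list (form P A)) p f w :
  falsifies M w (f :: map (Box (Star p)) G, [Box (Star p) f]) ->
  exists u, falsifies M u (f :: G, [Box p f]).
Proof.
  intros [HG HD]. simpl in *.
  assert (Hf : sat M w f) by auto.
  assert (HGs : forall g, In g G -> sat M w (Box (Star p) g))
    by (intros g Hg; apply HG; right; apply in_map, Hg).
  assert (Hn := HD _ (or_introl eq_refl)). simpl in Hn.
  apply not_all_ex_not in Hn as [v Hv]. apply imply_to_and in Hv as [Hr Hv].
  apply clos_rt_rt1n in Hr. clear HG HD.
  induction Hr as [w|w u v Hwu _ IH]; [contradiction|].
  destruct (classic (sat M u f)) as [Hu|Hu].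
  - apply IH; try assumption. intros g Hg x Hx. apply (HGs g Hg).
    apply rt_trans with u; [apply rt_step|]; assumption.
  - exists w. split; simpl.
    + intros x [<-|Hx]; [exact Hf|]. apply (HGs x Hx), rt_refl.
    + intros x [<-|[]] H. exact (Hu (H u Hwu)).
Qed.

Theorem gprovable_valid {P A} (s : sequent P A) : gprovable s -> valid s.
Proof.
  induction 1 as [r s Hr Hs Heq _ IH].
  apply valid_iff_unfalsifiable. intros M w Hf.
  apply (falsifies_seqeq M w _ _ Heq) in Hf.
  destruct Hr as [Hc|Hc].
  - destruct (falsified_premise M w r (or_introl Hc) Hs Hf) as [k [s' [w' [Hk [Hf' _]]]]].
    exact (proj1 (valid_iff_unfalsifiable s') (IH s' (nth_error_In _ _ Hk)) M w' Hf').
  - destruct r; try contradiction. destruct (star_right_falsified M G p f w Hf) as [u Hu].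
    exact (proj1 (valid_iff_unfalsifiable _) (IH _ (or_introl eq_refl)) M u Hu).
Qed.

(** * Cyclic proofs from finite proofs *)

Section Embedding.
Context {P A : Type}.
Notation ptree := (ptree P A).

Definition node_ok (s : sequent P A) (r : rule P A) (ts : list ptree) : Prop :=
  cgtpdl_rule r /\ side r /\ seqeq s (concl r) /\ length ts = length (prems r) /\
  (forall k t' s', nth_error ts k = Some t' -> nth_error (prems r) k = Some s' ->
     seqeq (label t') s').

Definition bud_ok (t : ptree) (s : sequent P A) (c : list nat) : Prop :=
  exists s' r ts, subtree t c = Some (PNode s' r ts) /\ seqeq s s'.

Definition cproof (t : ptree) : Prop := preproof t /\ global_trace_condition t.

Definition progressing_trace (t : ptree) (pth : nat -> list nat) (ks : nat -> nat) : Prop :=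
  exists (n : nat) (tau : nat -> form P A),
    (forall i, n <= i -> exists s r ts,
        subtree t (pth i) = Some (PNode s r ts) /\
        In (tau i) (snd s) /\ tstep r (ks i) (tau i) (tau (S i))) /\
    (forall m, exists i, m <= i /\ n <= i /\
        exists s r ts, subtree t (pth i) = Some (PNode s r ts) /\
          progress r (ks i) (tau i) (tau (S i))).

Lemma progressing_trace_tail t pth ks i0 :
  progressing_trace t (fun d => pth (d + i0)) (fun d => ks (d + i0)) -> progressing_trace t pth ks.
Proof.
  intros [n [tau [Htr Hprog]]]. exists (n + i0), (fun i => tau (i - i0)). split.
  - intros i Hi. destruct (Htr (i - i0) ltac:(lia)) as [s [r [ts [E [Hin Hst]]]]].
    replace (i - i0 + i0) with i in E, Hst by lia. replace (S i - i0) with (S (i - i0)) by lia.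
    exists s, r, ts. auto.
  - intro m. destruct (Hprog m) as [d [Hd1 [Hd2 Hp]]]. exists (d + i0).
    replace (d + i0 - i0) with d by lia. replace (S (d + i0) - i0) with (S d) by lia.
    split; [lia|split; [lia|exact Hp]].
Qed.

(* Bud addresses are absolute, so moving a tree to address [pre] must prefix them. *)
Fixpoint shift (pre : list nat) (t : ptree) : ptree :=
  match t with
  | PNode s r ts => PNode s r (map (shift pre) ts)
  | PBud s c => PBud s (pre ++ c)
  end.

Lemma label_shift pre t : label (shift pre t) = label t.
Proof. destruct t; reflexivity. Qed.

Lemma subtree_shift pre a : forall t,
  subtree (shift pre t) a = option_map (shift pre) (subtree t a).
Proof.
  induction a as [|k a IH]; intro t; [reflexivity|].
  destruct t as [s r ts|s c]; [|reflexivity]. simpl.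
  rewrite nth_error_map. destruct (nth_error ts k); [apply IH|reflexivity].
Qed.

Section Region.
Variables (T t : ptree) (pre : list nat).
Hypothesis HT : subtree T pre = Some (shift pre t).

Lemma subtree_region a : subtree T (pre ++ a) = option_map (shift pre) (subtree t a).
Proof. rewrite subtree_app, HT. apply subtree_shift. Qed.

Lemma region_ok : preproof t -> forall a,
  (forall s r ts, subtree T (pre ++ a) = Some (PNode s r ts) -> node_ok s r ts) /\
  (forall s c, subtree T (pre ++ a) = Some (PBud s c) -> bud_ok T s c).
Proof.
  intros [Hnode Hbud] a. rewrite subtree_region.
  destruct (subtree t a) as [[s1 r1 ts1|s1 c1]|] eqn:E; simpl; split; intros s0; try discriminate.
  - intros r0 ts0 [= <- <- <-].
    destruct (Hnode _ _ _ _ E) as [H1 [H2 [H3 [H4 H5]]]].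
    split; [|split; [|split; [|split]]]; auto; [rewrite length_map; exact H4|].
    intros k t2 s' E1 E2. rewrite nth_error_map in E1.
    destruct (nth_error ts1 k) as [t3|] eqn:E3; [|discriminate]. injection E1 as <-.
    rewrite label_shift. exact (H5 _ _ _ E3 E2).
  - intros c0 [= <- <-]. destruct (Hbud _ _ _ E) as [s' [r' [ts' [E' Heq]]]].
    exists s', r', (map (shift pre) ts'). rewrite subtree_region, E'. auto.
Qed.

Lemma edge_region a k b : edge T (pre ++ a) k b -> exists b', b = pre ++ b' /\ edge t a k b'.
Proof.
  intros [s [r [ts [t1 [H1 [H2 H3]]]]]].
  rewrite subtree_region in H1.
  destruct (subtree t a) as [[s' r' ts'|s' c']|] eqn:E; simpl in H1; try discriminate.
  injection H1 as <- <- <-. rewrite nth_error_map in H2.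
  destruct (nth_error ts' k) as [t2|] eqn:E2; simpl in H2; [|discriminate].
  injection H2 as <-. destruct t2 as [s2 r2 ts2|s2 c2]; simpl in H3.
  - exists (a ++ [k]). split; [subst; symmetry; apply app_assoc|].
    exists s', r', ts', (PNode s2 r2 ts2); auto.
  - exists c2. split; [exact H3|]. exists s', r', ts', (PBud s2 c2); auto.
Qed.

(* An infinite path that enters the region never leaves it, so it inherits a trace from [t]. *)
Lemma region_progressing_trace pth ks i0 q :
  global_trace_condition t -> (forall i, edge T (pth i) (ks i) (pth (S i))) ->
  pth i0 = pre ++ q -> progressing_trace T pth ks.
Proof.
  intros Hgtc HE Hq.
  assert (Hstay : forall d, exists q', pth (d + i0) = pre ++ q').
  { induction d as [|d [q' Hq']]; [exists q; exact Hq|].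
    assert (He := HE (d + i0)). rewrite Hq' in He.
    destruct (edge_region _ _ _ He) as [b' [Hb _]]. exists b'. exact Hb. }
  set (qq := fun d => skipn (length pre) (pth (d + i0))).
  assert (Hqq : forall d, pth (d + i0) = pre ++ qq d).
  { intro d. destruct (Hstay d) as [q' Hq']. unfold qq. rewrite Hq', skipn_app, skipn_all,
      Nat.sub_diag. reflexivity. }
  apply (progressing_trace_tail _ _ _ i0).
  destruct (Hgtc qq (fun d => ks (d + i0))) as [n [tau [Htr Hprog]]].
  { intro d. assert (He := HE (d + i0)). rewrite Hqq in He.
    destruct (edge_region _ _ _ He) as [b' [Hb He']].
    replace (qq (S d)) with b'; [exact He'|].
    apply (app_inv_head pre). rewrite <- Hb. exact (Hqq (S d)). }
  assert (Hsub : forall d s r ts, subtree t (qq d) = Some (PNode s r ts) ->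
            subtree T (pth (d + i0)) = Some (PNode s r (map (shift pre) ts))).
  { intros d s r ts E. rewrite Hqq, subtree_region, E. reflexivity. }
  exists n, tau. split.
  - intros i Hi. destruct (Htr i Hi) as [s [r [ts [E Hrest]]]].
    exists s, r, (map (shift pre) ts). split; [exact (Hsub _ _ _ _ E)|exact Hrest].
  - intro m. destruct (Hprog m) as [i [Hm [Hn [s [r [ts [E Hp]]]]]]].
    exists i. split; [exact Hm|]. split; [exact Hn|].
    exists s, r, (map (shift pre) ts). split; [exact (Hsub _ _ _ _ E)|exact Hp].
Qed.
End Region.
End Embedding.

Lemma Forall2_nth_error {X Y : Type} (R : X -> Y -> Prop) l1 l2 :
  Forall2 R l1 l2 -> forall k x, nth_error l1 k = Some x -> exists y,
    nth_error l2 k = Some y /\ R x y.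
Proof.
  induction 1 as [|x y l1 l2 Hxy _ IH]; intros [|k] x0 Hk; try discriminate.
  - injection Hk as <-. exists y. auto.
  - exact (IH _ _ Hk).
Qed.

Section Grafting.
Context {P A : Type}.
Notation ptree := (ptree P A).

Fixpoint shift_children (n : nat) (ts : list ptree) : list ptree :=
  match ts with [] => [] | t :: ts => shift [n] t :: shift_children (S n) ts end.

Lemma nth_error_shift_children ts : forall n k,
  nth_error (shift_children n ts) k = option_map (shift [n + k]) (nth_error ts k).
Proof.
  induction ts as [|t ts IH]; intros n [|k]; simpl; try reflexivity.
  - rewrite Nat.add_0_r. reflexivity.
  - rewrite IH. do 3 f_equal. lia.
Qed.

Lemma length_shift_children ts : forall n, length (shift_children n ts) = length ts.
Proof. induction ts; simpl; auto. Qed.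

Definition graft (s : sequent P A) (r : rule P A) (ts : list ptree) : ptree :=
  PNode s r (shift_children 0 ts).

Lemma subtree_graft s r ts k a :
  subtree (graft s r ts) (k :: a) =
  match nth_error ts k with Some t => option_map (shift [k]) (subtree t a) | None => None end.
Proof.
  simpl. rewrite nth_error_shift_children. destruct (nth_error ts k);
    [apply subtree_shift|reflexivity].
Qed.

Lemma subtree_graft_child s r ts k t :
  nth_error ts k = Some t -> subtree (graft s r ts) [k] = Some (shift [k] t).
Proof. intro E. rewrite subtree_graft, E. reflexivity. Qed.

Section GraftCproof.
Variables (s : sequent P A) (r : rule P A) (ts : list ptree).
Hypotheses (Hr : cgtpdl_rule r) (Hs : side r) (Heq : seqeq s (concl r)).
Hypothesis Hts : Forall2 (fun t s' => cproof t /\ seqeq (label t) s') ts (prems r).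

Lemma graft_child k t : nth_error ts k = Some t ->
  cproof t /\ exists s', nth_error (prems r) k = Some s' /\ seqeq (label t) s'.
Proof.
  intro Hk. destruct (Forall2_nth_error _ _ _ Hts k _ Hk) as [s' [Hs' [Hc Hl]]]. eauto.
Qed.

Lemma graft_preproof : preproof (graft s r ts).
Proof.
  split.
  - intros [|k a] s0 r0 ts0 E.
    + injection E as <- <- <-. split; [exact Hr|split; [exact Hs|split; [exact Heq|split]]].
      * rewrite length_shift_children. exact (Forall2_length Hts).
      * intros k t' s' E1 E2. rewrite nth_error_shift_children in E1.
        destruct (nth_error ts k) as [t1|] eqn:E3; [|discriminate]. injection E1 as <-.
        destruct (graft_child _ _ E3) as [_ [s'' [E4 Hl]]]. rewrite label_shift.
        rewrite E2 in E4. injection E4 as <-. exact Hl.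
    + destruct (nth_error ts k) as [t1|] eqn:Ek; [|rewrite subtree_graft, Ek in E; discriminate].
      destruct (graft_child _ _ Ek) as [[Hpre _] _].
      exact (proj1 (region_ok _ _ [k] (subtree_graft_child s r ts k t1 Ek) Hpre a) _ _ _ E).
  - intros [|k a] s0 c E; [discriminate|].
    destruct (nth_error ts k) as [t1|] eqn:Ek; [|rewrite subtree_graft, Ek in E; discriminate].
    destruct (graft_child _ _ Ek) as [[Hpre _] _].
    exact (proj2 (region_ok _ _ [k] (subtree_graft_child s r ts k t1 Ek) Hpre a) _ _ E).
Qed.

(* After its first step an infinite path is inside the copy of one premise's proof. *)
Lemma graft_gtc : global_trace_condition (graft s r ts).
Proof.
  intros pth ks HE.
  assert (Hin : exists k t1 q, nth_error ts k = Some t1 /\ pth 1 = [k] ++ q).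
  { destruct (HE 0) as [s0 [r0 [ts0 [t' [E1 [E2 E3]]]]]].
    destruct (pth 0) as [|j a] eqn:E0.
    - injection E1 as <- <- <-. rewrite nth_error_shift_children in E2.
      destruct (nth_error ts (ks 0)) as [t1|] eqn:E4; [|discriminate]. injection E2 as <-.
      destruct (graft_child _ _ E4) as [[Hpre _] _].
      destruct (preproof_root t1 Hpre) as [s1 [r1 [ts1 ->]]].
      exists (ks 0), (PNode s1 r1 ts1), []. split; [exact E4|]. rewrite E3. reflexivity.
    - destruct (nth_error ts j) as [t1|] eqn:Ej; [|rewrite subtree_graft, Ej in E1; discriminate].
      assert (He := HE 0). rewrite E0 in He.
      destruct (edge_region _ _ [j] (subtree_graft_child s r ts j t1 Ej) a _ _ He) as [b [Hb _]].
      exists j, t1, b. split; [exact Ej|exact Hb]. }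
  destruct Hin as [k [t1 [q [Ek Hq]]]].
  destruct (graft_child _ _ Ek) as [[_ Hgtc] _].
  exact (region_progressing_trace _ _ [k] (subtree_graft_child s r ts k t1 Ek)
    pth ks 1 q Hgtc HE Hq).
Qed.
End GraftCproof.
End Grafting.

Section StarLoop.
Context {P A : Type}.
Variables (p : prog P A) (f : form P A) (t : ptree P A).
Hypothesis Ht : cproof t.
Hypothesis Hlabel : seqeq (label t) ([f], [Box p f]).
Notation bs := (Box (Star p) f).

(* The cyclic proof of [f => [p*]f] from a proof [t] of [f => [p]f]: unfold the star with
   (C-s), cut in [t] and return to the root through the box rule. *)
Definition star_loop : ptree P A :=
  PNode ([f], [bs]) (RCs [f] [] p f)
   [ PNode ([f], [f]) (RAx [f] [f]) [];
     PNode ([f], [Box p bs]) (RCut [f] [Box p bs] (Box p f))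
       [ PNode ([f], [Box p f; Box p bs]) (RWk [f] [Box p f] [f] [Box p f; Box p bs])
           [shift [1;0;0] t];
         PNode ([Box p f; f], [Box p bs]) (RWk [Box p f] [Box p bs] [Box p f; f] [Box p bs])
           [ PNode ([Box p f], [Box p bs]) (RBox [f] [] p bs) [PBud ([f], [bs]) []] ] ] ].

Lemma star_loop_region : subtree star_loop [1;0;0] = Some (shift [1;0;0] t).
Proof. reflexivity. Qed.

Ltac listed := right; repeat (first [left; reflexivity|right]).

Lemma star_loop_addresses a x : subtree star_loop a = Some x ->
  (exists a', a = [1;0;0] ++ a') \/
  In a [[]; [0]; [1]; [1;0]; [1;1]; [1;1;0]; [1;1;0;0]].
Proof.
  intro E.
  destruct a as [|[|[|n]] a]; [listed| | |destruct n; discriminate].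
  - destruct a as [|n a]; [listed|destruct n; discriminate].
  - destruct a as [|[|[|n]] a]; [listed| | |destruct n; discriminate].
    + destruct a as [|[|n] a]; [listed|left; exists a; reflexivity|destruct n; discriminate].
    + destruct a as [|[|n] a]; [listed| |destruct n; discriminate].
      destruct a as [|[|n] a]; [listed| |destruct n; discriminate].
      destruct a as [|n a]; [listed|destruct n; discriminate].
Qed.

Lemma star_loop_preproof : preproof star_loop.
Proof.
  destruct Ht as [Hpre _]. split.
  - intros a s r ts E. destruct (star_loop_addresses a _ E) as [[a' ->]|Ha].
    { exact (proj1 (region_ok _ _ _ star_loop_region Hpre a') _ _ _ E). }
    repeat destruct Ha as [<-|Ha]; try contradiction; simpl in E; try discriminate;
      injection E as <- <- <-;
      (split; [first [left; exact I|right; exact I]|]);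
      (split; [|split; [apply seqeq_refl|split; [reflexivity|]]]);
      try (simpl; first [exact I|exists f; simpl; auto|split; intros x Hx; simpl in *; tauto]);
      intros [|[|k]] t1 s1 E1 E2; simpl in E1, E2; try discriminate; try (destruct k; discriminate);
      injection E1 as <-; injection E2 as <-; try apply seqeq_refl.
    rewrite label_shift. exact Hlabel.
  - intros a s c E. destruct (star_loop_addresses a _ E) as [[a' ->]|Ha].
    { exact (proj2 (region_ok _ _ _ star_loop_region Hpre a') _ _ E). }
    repeat destruct Ha as [<-|Ha]; try contradiction; simpl in E; try discriminate.
    injection E as <- <-. exists ([f], [bs]), (RCs [f] [] p f). eexists.
    split; [reflexivity|apply seqeq_refl].
Qed.

Definition loop_edge (a : list nat) (k : nat) (b : list nat) : Prop :=
  (a = [] /\ k = 1 /\ b = [1]) \/ (a = [1] /\ k = 1 /\ b = [1;1]) \/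
  (a = [1;1] /\ k = 0 /\ b = [1;1;0]) \/ (a = [1;1;0] /\ k = 0 /\ b = []).

Lemma star_loop_edge a k b :
  edge star_loop a k b -> (forall q, a <> [1;0;0] ++ q) ->
  loop_edge a k b \/ (a = [] /\ b = [0]) \/ (a = [1] /\ b = [1;0]) \/ (a = [1;0] /\ b = [1;0;0]).
Proof.
  intros [s [r [ts [t' [E1 [E2 E3]]]]]] Hout.
  destruct (star_loop_addresses a _ E1) as [[q Hq]|Ha]; [elim (Hout q Hq)|].
  destruct (preproof_root t (proj1 Ht)) as [s0 [r0 [ts0 Et]]].
  unfold loop_edge.
  repeat destruct Ha as [<-|Ha]; try contradiction; simpl in E1; try discriminate;
    injection E1 as <- <- <-;
    destruct k as [|[|k]]; simpl in E2; try discriminate; try (destruct k; discriminate);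
    injection E2 as <-; rewrite ?Et in E3; simpl in E3; subst b; tauto.
Qed.

Lemma star_loop_path pth ks :
  (forall i, edge star_loop (pth i) (ks i) (pth (S i))) ->
  (forall i q, pth i <> [1;0;0] ++ q) ->
  forall i, loop_edge (pth i) (ks i) (pth (S i)).
Proof.
  intros HE Hout i.
  destruct (star_loop_edge _ _ _ (HE i) (Hout i)) as [Hl|[[_ E]|[[_ E]|[_ E]]]]; [exact Hl| | |].
  - destruct (star_loop_edge _ _ _ (HE (S i)) (Hout (S i))) as [Hl|[[E' _]|[[E' _]|[E' _]]]];
      rewrite E in *; [unfold loop_edge in Hl; intuition discriminate|discriminate..].
  - destruct (star_loop_edge _ _ _ (HE (S i)) (Hout (S i))) as [Hl|[[E' _]|[[E' _]|[_ E']]]];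
      rewrite E in *; [unfold loop_edge in Hl; intuition discriminate|discriminate|discriminate|].
    elim (Hout (S (S i)) []). rewrite E'. reflexivity.
  - elim (Hout (S i) []). rewrite E. reflexivity.
Qed.

Lemma loop_returns pth ks :
  (forall i, loop_edge (pth i) (ks i) (pth (S i))) -> forall m, exists i, m <= i /\ pth i = [].
Proof.
  intros Hloop m.
  assert (Hnext : forall i a, pth i = a -> loop_edge a (ks i) (pth (S i)))
    by (intros i a <-; apply Hloop).
  destruct (Hloop m) as [[E _]|[[_ [_ E1]]|[[_ [_ E1]]|[_ [_ E1]]]]].
  - exists m. auto.
  - destruct (Hnext _ _ E1) as [[E _]|[[E _]|[[_ [_ E2]]|[E _]]]]; try discriminate.
    destruct (Hnext _ _ E2) as [[E _]|[[E _]|[[E _]|[_ [_ E3]]]]]; try discriminate.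
    exists (S (S (S m))). auto.
  - destruct (Hnext _ _ E1) as [[E _]|[[E _]|[[E _]|[_ [_ E2]]]]]; try discriminate.
    exists (S (S m)). auto.
  - exists (S m). auto.
Qed.

(* Outside the copy of [t] the trace alternates between [[p*]f] at the root and [[p][p*]f],
   progressing at every passage through the root. *)
Lemma star_loop_gtc : global_trace_condition star_loop.
Proof.
  intros pth ks HE.
  destruct (classic (exists i q, pth i = [1;0;0] ++ q)) as [[i [q Hq]]|Hout].
  { exact (region_progressing_trace _ _ _ star_loop_region pth ks i q (proj2 Ht) HE Hq). }
  assert (Hloop := star_loop_path pth ks HE (fun i q E => Hout (ex_intro _ i (ex_intro _ q E)))).
  exists 0, (fun i => match pth i with [] => bs | _ => Box p bs end). split.
  - intros i _. destruct (Hloop i) as [[E1 [E2 E3]]|[[E1 [E2 E3]]|[[E1 [E2 E3]]|[E1 [E2 E3]]]]];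
      rewrite E1, E2, E3; do 3 eexists; split; try reflexivity; simpl; auto.
  - intro m. destruct (loop_returns pth ks Hloop m) as [i [Hi E]]. exists i.
    split; [exact Hi|split; [lia|]].
    destruct (Hloop i) as [[_ [E2 E3]]|[[E1 _]|[[E1 _]|[E1 _]]]]; rewrite E in *; try discriminate.
    rewrite E2, E3. do 3 eexists. split; [reflexivity|]. simpl. auto.
Qed.

Lemma star_loop_cproof : cproof star_loop.
Proof. split; [exact star_loop_preproof|exact star_loop_gtc]. Qed.
End StarLoop.

(** * The calculus with restricted induction *)

Section RestrictedCalculus.
Context {P A : Type}.
Notation form := (form P A).
Notation prog := (prog P A).

Inductive prov : sequent P A -> Prop :=
| prov_rule (r : rule P A) s : common_rule r -> side r -> seqeq s (concl r) ->
    (forall s', In s' (prems r) -> prov s') -> prov s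
| prov_star (p : prog) (f : form) s : seqeq s ([f], [Box (Star p) f]) ->
    prov ([f], [Box p f]) -> prov s.

Lemma prov_gprovable s : prov s -> gprovable s.
Proof.
  induction 1 as [r s Hr Hs Heq _ IH|p f s Heq _ IH].
  - apply (@gp_node _ _ r); [left; exact Hr|exact Hs|exact Heq|exact IH].
  - apply (@gp_node _ _ (RStarR [] p f)); [right; exact I|exact I|exact Heq|].
    intros s' [<-|[]]. exact IH.
Qed.

Lemma Forall2_of_exists {X Y : Type} (R : X -> Y -> Prop) (l : list Y) :
  (forall y, In y l -> exists x, R x y) -> exists l', Forall2 R l' l.
Proof.
  induction l as [|y l IH]; intro H; [exists []; constructor|].
  destruct (H y (or_introl eq_refl)) as [x Hx].
  destruct IH as [l' Hl']; [intros z Hz; apply H; right; exact Hz|].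
  exists (x :: l'). constructor; assumption.
Qed.

Lemma prov_cproof s : prov s -> exists t, cproof t /\ seqeq (label t) s.
Proof.
  induction 1 as [r s Hr Hs Heq _ IH|p f s Heq _ [t [Ht Hl]]].
  - destruct (Forall2_of_exists _ _ IH) as [ts Hts].
    exists (graft s r ts). split; [|apply seqeq_refl].
    split; [apply graft_preproof|apply graft_gtc]; auto. left; exact Hr.
  - exists (star_loop p f t). split; [exact (star_loop_cproof p f t Ht Hl)|].
    exact (seqeq_sym _ _ Heq).
Qed.

Lemma prov_cprovable s : prov s -> cprovable s.
Proof. intro H. destruct (prov_cproof s H) as [t [[Hpre Hgtc] Hl]]. exists t. auto. Qed.
End RestrictedCalculus.

Notation "G ⊢ D" := (prov (G, D)) (at level 70).

Ltac incl_tac := let z := fresh "z" in let Hz := fresh "Hz" in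
  intros z Hz; repeat (progress (simpl in *) || rewrite in_app_iff in *);
  intuition (subst; simpl; auto).

Section PrimitiveRules.
Context {P A : Type}.
Notation form := (form P A).
Notation prog := (prog P A).
Implicit Types (G D : list form) (f g : form) (p q : prog).

Lemma seteq_absorb (x : form) G : In x G -> seteq (x :: G) G.
Proof. intros H z; simpl; split; [intros [<-|Hz]; auto|auto]. Qed.

Lemma prov_by (r : rule P A) G D : common_rule r -> side r -> concl r = (G, D) ->
  (forall s', In s' (prems r) -> prov s') -> G ⊢ D.
Proof. intros Hr Hs Hc. apply prov_rule; [exact Hr|exact Hs|rewrite Hc; apply seqeq_refl]. Qed.

Lemma prov_by_left (r : rule P A) x G D :
  common_rule r -> side r -> concl r = (x :: G, D) -> In x G ->
  (forall s', In s' (prems r) -> prov s') -> G ⊢ D.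
Proof.
  intros Hr Hs Hc Hx. apply prov_rule; [exact Hr|exact Hs|].
  rewrite Hc. split; [intro z; symmetry; apply seteq_absorb, Hx|intro; reflexivity].
Qed.

Lemma prov_by_right (r : rule P A) x G D :
  common_rule r -> side r -> concl r = (G, x :: D) -> In x D ->
  (forall s', In s' (prems r) -> prov s') -> G ⊢ D.
Proof.
  intros Hr Hs Hc Hx. apply prov_rule; [exact Hr|exact Hs|].
  rewrite Hc. split; [intro; reflexivity|intro z; symmetry; apply seteq_absorb, Hx].
Qed.

Ltac rule_tac := simpl; try exact I; try reflexivity; try assumption;
  try (intros s' Hs'; repeat destruct Hs' as [<-|Hs']; try contradiction; assumption).

Lemma prov_wk G D G' D' : G ⊢ D -> incl G G' -> incl D D' -> G' ⊢ D'.
Proof. intros H HG HD. apply (prov_by (RWk G D G' D')); rule_tac. split; assumption. Qed.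

Lemma prov_ax f G D : In f G -> In f D -> G ⊢ D.
Proof. intros HG HD. apply (prov_by (RAx G D)); rule_tac. exists f; split; assumption. Qed.

Lemma prov_bot G D : In Bot G -> G ⊢ D.
Proof. intro H. apply (prov_by_left (RBot G D) Bot); rule_tac. Qed.

Lemma prov_cut f G D : G ⊢ f :: D -> f :: G ⊢ D -> G ⊢ D.
Proof. intros H1 H2. apply (prov_by (RCut G D f)); rule_tac. Qed.

Lemma prov_impL f g G D : In (Imp f g) G -> G ⊢ f :: D -> g :: G ⊢ D -> G ⊢ D.
Proof. intros H H1 H2. apply (prov_by_left (RImpL G D f g) (Imp f g)); rule_tac. Qed.

Lemma prov_impR f g G D : In (Imp f g) D -> f :: G ⊢ g :: D -> G ⊢ D.
Proof. intros H H1. apply (prov_by_right (RImpR G D f g) (Imp f g)); rule_tac. Qed.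

Lemma prov_box p f G D : G ⊢ f :: map (BoxC p) D -> map (Box p) G ⊢ Box p f :: D.
Proof. intro H. apply (prov_by (RBox G D p f)); rule_tac. Qed.

Lemma prov_boxC p f G D : G ⊢ f :: map (Box p) D -> map (BoxC p) G ⊢ BoxC p f :: D.
Proof. intro H. apply (prov_by (RBoxC G D p f)); rule_tac. Qed.

Lemma prov_seqL p q f G D : In (Box (Seq p q) f) G -> Box p (Box q f) :: G ⊢ D -> G ⊢ D.
Proof. intros H H1. apply (prov_by_left (RSeqL G D p q f) (Box (Seq p q) f)); rule_tac. Qed.

Lemma prov_seqR p q f G D : In (Box (Seq p q) f) D -> G ⊢ Box p (Box q f) :: D -> G ⊢ D.
Proof. intros H H1. apply (prov_by_right (RSeqR G D p q f) (Box (Seq p q) f)); rule_tac. Qed.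

Lemma prov_cupL p q f G D : In (Box (Cup p q) f) G -> Box p f :: Box q f :: G ⊢ D -> G ⊢ D.
Proof. intros H H1. apply (prov_by_left (RCupL G D p q f) (Box (Cup p q) f)); rule_tac. Qed.

Lemma prov_cupR p q f G D :
  In (Box (Cup p q) f) D -> G ⊢ Box p f :: D -> G ⊢ Box q f :: D -> G ⊢ D.
Proof. intros H H1 H2. apply (prov_by_right (RCupR G D p q f) (Box (Cup p q) f)); rule_tac. Qed.

Lemma prov_starL p f G D :
  In (Box (Star p) f) G -> f :: Box p (Box (Star p) f) :: G ⊢ D -> G ⊢ D.
Proof. intros H H1. apply (prov_by_left (RStarL G D p f) (Box (Star p) f)); rule_tac. Qed.

Lemma prov_testL f g G D : In (Box (Test f) g) G -> G ⊢ f :: D -> g :: G ⊢ D -> G ⊢ D.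
Proof. intros H H1 H2. apply (prov_by_left (RTestL G D f g) (Box (Test f) g)); rule_tac. Qed.

Lemma prov_testR f g G D : In (Box (Test f) g) D -> f :: G ⊢ g :: D -> G ⊢ D.
Proof. intros H H1. apply (prov_by_right (RTestR G D f g) (Box (Test f) g)); rule_tac. Qed.

Lemma prov_star_ind p f : [f] ⊢ [Box p f] -> [f] ⊢ [Box (Star p) f].
Proof. intro H. apply (prov_star p f); [apply seqeq_refl|exact H]. Qed.

Lemma box_seq_unfold p q f : [Box (Seq p q) f] ⊢ [Box p (Box q f)].
Proof.
  apply (prov_seqL p q f); [left; reflexivity|]. apply (prov_ax (Box p (Box q f))); simpl; auto.
Qed.

Lemma box_cup_unfold p q f : [Box (Cup p q) f] ⊢ [Box p f] /\ [Box (Cup p q) f] ⊢ [Box q f].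
Proof.
  split; (apply (prov_cupL p q f); [left; reflexivity|]);
    [apply (prov_ax (Box p f))|apply (prov_ax (Box q f))]; simpl; auto.
Qed.

Lemma box_star_unfold p f : [Box (Star p) f] ⊢ [f] /\ [Box (Star p) f] ⊢ [Box p (Box (Star p) f)].
Proof.
  split; (apply (prov_starL p f); [left; reflexivity|]);
    [apply (prov_ax f)|apply (prov_ax (Box p (Box (Star p) f)))]; simpl; auto.
Qed.
End PrimitiveRules.

Ltac wk H := eapply prov_wk; [exact H|incl_tac|incl_tac].

Section Propositional.
Context {P A : Type}.
Notation form := (form P A).
Implicit Types (G D l : list form) (f g : form).

Definition Neg f : form := Imp f Bot.

Lemma prov_negR f G D : f :: G ⊢ D -> G ⊢ Neg f :: D.
Proof. intro H. apply (prov_impR f Bot); [left; reflexivity|wk H]. Qed.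

Lemma prov_negL f G D : G ⊢ f :: D -> Neg f :: G ⊢ D.
Proof.
  intro H. apply (prov_impL f Bot); [left; reflexivity|wk H|apply prov_bot; left; reflexivity].
Qed.

Lemma prov_negR_inv f G D : G ⊢ Neg f :: D -> f :: G ⊢ D.
Proof.
  intro H. apply (prov_cut (Neg f)); [wk H|]. apply prov_negL, (prov_ax f); simpl; auto.
Qed.

Lemma prov_negL_inv f G D : Neg f :: G ⊢ D -> G ⊢ f :: D.
Proof.
  intro H. apply (prov_cut (Neg f)); [|wk H]. apply prov_negR, (prov_ax f); simpl; auto.
Qed.

Lemma prov_impR_inv f g G D : G ⊢ Imp f g :: D -> f :: G ⊢ g :: D.
Proof.
  intro H. apply (prov_cut (Imp f g)); [wk H|].
  apply (prov_impL f g); [left; reflexivity|apply (prov_ax f)|apply (prov_ax g)]; simpl; auto.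
Qed.

Lemma prov_trans f g h : [f] ⊢ [g] -> [g] ⊢ [h] -> [f] ⊢ [h].
Proof. intros H1 H2. apply (prov_cut g); [wk H1|wk H2]. Qed.

Lemma prov_entailR f g G D : [f] ⊢ [g] -> G ⊢ f :: D -> G ⊢ g :: D.
Proof. intros H1 H2. apply (prov_cut f); [wk H2|wk H1]. Qed.

Lemma prov_entail2R f g h G D : [f; g] ⊢ [h] -> G ⊢ f :: D -> G ⊢ g :: D -> G ⊢ h :: D.
Proof. intros H H1 H2. apply (prov_cut f); [wk H1|]. apply (prov_cut g); [wk H2|wk H]. Qed.

Fixpoint imps l g : form := match l with [] => g | f :: l => Imp f (imps l g) end.

Definition disj l : form := imps (map Neg l) Bot.

Lemma prov_impsR l : forall g G D, l ++ G ⊢ g :: D -> G ⊢ imps l g :: D.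
Proof.
  induction l as [|f l IH]; intros g G D H; [exact H|].
  apply (prov_impR f (imps l g)); [left; reflexivity|]. apply IH. wk H.
Qed.

Lemma prov_impsL l : forall g G D,
  (forall f, In f l -> G ⊢ f :: D) -> g :: G ⊢ D -> imps l g :: G ⊢ D.
Proof.
  induction l as [|f l IH]; intros g G D Hl Hg; [exact Hg|].
  apply (prov_impL f (imps l g)); [left; reflexivity|wk (Hl f (or_introl eq_refl))|].
  apply IH; [intros h Hh; wk (Hl h (or_intror Hh))|wk Hg].
Qed.

Lemma prov_negsL l : forall G D, G ⊢ l ++ D -> map Neg l ++ G ⊢ D.
Proof.
  induction l as [|f l IH]; intros G D H; [exact H|].
  apply prov_negL. apply (prov_wk (map Neg l ++ G) (f :: D)); [|incl_tac|incl_tac].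
  apply IH. wk H.
Qed.

Lemma prov_disjR l G D : G ⊢ l ++ D -> G ⊢ disj l :: D.
Proof.
  intro H. apply prov_impsR. apply (prov_wk (map Neg l ++ G) D); [|incl_tac|incl_tac].
  apply prov_negsL, H.
Qed.

Lemma prov_disjL l G D : (forall f, In f l -> f :: G ⊢ D) -> disj l :: G ⊢ D.
Proof.
  intro H. apply prov_impsL; [|apply prov_bot; left; reflexivity].
  intros h Hh. apply in_map_iff in Hh as [f [<- Hf]]. apply prov_negR, H, Hf.
Qed.

Definition chi (B : sequent P A) : form := Neg (imps (fst B) (disj (snd B))).

Lemma prov_chiR (B : sequent P A) G D : incl (fst B) G -> incl (snd B) D -> G ⊢ chi B :: D.
Proof.
  intros HG HD. apply prov_negR, prov_impsL.
  - intros f Hf. apply (prov_ax f); [apply HG, Hf|left; reflexivity].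
  - apply prov_disjL. intros f Hf. apply (prov_ax f); [left; reflexivity|apply HD, Hf].
Qed.

Lemma prov_chiL (B : sequent P A) G D : fst B ++ G ⊢ snd B ++ D -> chi B :: G ⊢ D.
Proof. intro H. apply prov_negL, prov_impsR, prov_disjR, H. Qed.
End Propositional.

(* The calculus decomposes programs only under forward boxes.  The converse-box analogues are
   derived from the tense law [psi \/ [p]~[p]^<- psi], which the box rule provides. *)
Section ConverseBoxes.
Context {P A : Type}.
Notation form := (form P A).
Notation prog := (prog P A).
Implicit Types (f g h psi chi : form) (p q : prog).

Lemma prov_box_mono p f g : [f] ⊢ [g] -> [Box p f] ⊢ [Box p g].
Proof. exact (prov_box p g [f] []). Qed.

Lemma prov_boxC_mono p f g : [f] ⊢ [g] -> [BoxC p f] ⊢ [BoxC p g].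
Proof. exact (prov_boxC p g [f] []). Qed.

Lemma prov_boxC_adjoint p f g : [] ⊢ [g; Box p (Neg f)] -> [f] ⊢ [BoxC p g].
Proof. intro H. apply prov_negR_inv. wk (prov_boxC p g [] [Neg f] H). Qed.

Lemma prov_tense p psi : [] ⊢ [Box p (Neg (BoxC p psi)); psi].
Proof.
  apply (prov_box p _ [] [psi]). apply prov_negR. apply (prov_ax (BoxC p psi)); simpl; auto.
Qed.

Lemma boxC_seq_unfold p q psi : [BoxC (Seq p q) psi] ⊢ [BoxC q (BoxC p psi)].
Proof.
  set (Y := BoxC (Seq p q) psi). apply prov_boxC_adjoint.
  apply (prov_boxC p psi [] [Box q (Neg Y)]).
  apply (prov_cut (Box (Seq p q) (Neg Y))); [wk (prov_tense (Seq p q) psi)|].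
  apply (prov_seqL p q (Neg Y)); [simpl; auto|].
  apply (prov_ax (Box p (Box q (Neg Y)))); simpl; auto.
Qed.

Lemma boxC_seq_fold p q psi : [BoxC q (BoxC p psi)] ⊢ [BoxC (Seq p q) psi].
Proof.
  set (X := BoxC q (BoxC p psi)). apply prov_boxC_adjoint.
  apply (prov_seqR p q (Neg X)); [simpl; auto|].
  assert (H : [] ⊢ [Neg X; X]) by (apply prov_negR, (prov_ax X); simpl; auto).
  wk (prov_box p _ [] [psi] (prov_box q _ [] [BoxC p psi] H)).
Qed.

Lemma boxC_cup_unfold p q psi :
  [BoxC (Cup p q) psi] ⊢ [BoxC p psi] /\ [BoxC (Cup p q) psi] ⊢ [BoxC q psi].
Proof.
  set (Y := BoxC (Cup p q) psi). split; apply prov_boxC_adjoint;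
    (apply (prov_cut (Box (Cup p q) (Neg Y))); [wk (prov_tense (Cup p q) psi)|]);
    apply (prov_cupL p q (Neg Y)); simpl; auto; [apply (prov_ax (Box p (Neg Y)))
      |apply (prov_ax (Box q (Neg Y)))]; simpl; auto.
Qed.

Lemma boxC_cup_fold p q psi : [BoxC p psi; BoxC q psi] ⊢ [BoxC (Cup p q) psi].
Proof.
  set (X0 := BoxC p psi). set (X1 := BoxC q psi). set (Z := Imp X0 (Neg X1)).
  assert (H : [] ⊢ [psi; Box (Cup p q) Z]).
  { apply (prov_cupR p q Z); [simpl; auto| |].
    - assert (H1 : [] ⊢ [Z; X0]).
      { apply (prov_impR X0 (Neg X1)); [simpl; auto|]. apply (prov_ax X0); simpl; auto. }
      wk (prov_box p _ [] [psi] H1).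
    - assert (H1 : [] ⊢ [Z; X1]).
      { apply (prov_impR X0 (Neg X1)); [simpl; auto|]. apply prov_negR, (prov_ax X1); simpl; auto. }
      wk (prov_box q _ [] [psi] H1). }
  assert (H1 : [] ⊢ [Z; BoxC (Cup p q) psi]) by wk (prov_boxC (Cup p q) psi [] [Z] H).
  apply prov_impR_inv, prov_negR_inv in H1. wk H1.
Qed.

Lemma boxC_test_unfold g psi : [BoxC (Test g) psi; g] ⊢ [psi].
Proof.
  set (Y := BoxC (Test g) psi).
  assert (H : [g] ⊢ [Neg Y; psi]).
  { apply (prov_cut (Box (Test g) (Neg Y))); [wk (prov_tense (Test g) psi)|].
    apply (prov_testL g (Neg Y)); [simpl; auto|apply (prov_ax g)|apply (prov_ax (Neg Y))];
      simpl; auto. }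
  apply prov_negR_inv in H. wk H.
Qed.

Lemma boxC_test_fold g psi : [Imp g psi] ⊢ [BoxC (Test g) psi].
Proof.
  apply prov_boxC_adjoint. apply (prov_testR g (Neg (Imp g psi))); [simpl; auto|].
  apply prov_negR.
  apply (prov_impL g psi); [simpl; auto|apply (prov_ax g)|apply (prov_ax psi)]; simpl; auto.
Qed.

Lemma boxC_star_unfold_refl p psi : [BoxC (Star p) psi] ⊢ [psi].
Proof.
  set (Y := BoxC (Star p) psi).
  assert (H : [] ⊢ [Neg Y; psi]).
  { apply (prov_cut (Box (Star p) (Neg Y))); [wk (prov_tense (Star p) psi)|].
    apply (prov_starL p (Neg Y)); [simpl; auto|]. apply (prov_ax (Neg Y)); simpl; auto. }
  exact (prov_negR_inv _ _ _ H).
Qed.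

Lemma boxC_star_ind p chi : [chi] ⊢ [BoxC p chi] -> [chi] ⊢ [BoxC (Star p) chi].
Proof.
  intro H.
  assert (H1 : [] ⊢ [Neg chi; BoxC p chi]) by (apply prov_negR; wk H).
  assert (H2 : [Neg chi] ⊢ [Box p (Neg chi)]) by (apply prov_negL; wk (prov_box p _ [] [chi] H1)).
  assert (H3 : [] ⊢ [chi; Box (Star p) (Neg chi)])
    by exact (prov_negL_inv _ _ _ (prov_star_ind _ _ H2)).
  apply prov_negR_inv. wk (prov_boxC (Star p) chi [] [Neg chi] H3).
Qed.

Lemma boxC_star_unfold_step p psi : [BoxC (Star p) psi] ⊢ [BoxC p (BoxC (Star p) psi)].
Proof.
  (* [~Y] is equivalent to the [p]-invariant formula [Z], hence [~Y |- [p]~Y]. *)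
  set (Y := BoxC (Star p) psi). set (Z := Box (Star p) (Neg Y)).
  assert (HZ : [Z] ⊢ [Box p Z]).
  { apply (prov_starL p (Neg Y)); [simpl; auto|]. apply (prov_ax (Box p Z)); simpl; auto. }
  assert (HnY : [Z] ⊢ [Neg Y]).
  { apply (prov_starL p (Neg Y)); [simpl; auto|]. apply (prov_ax (Neg Y)); simpl; auto. }
  assert (Hinv : [Neg Z] ⊢ [BoxC (Star p) (Neg Z)]).
  { assert (H1 : [] ⊢ [Neg Z; Box (Star p) Z]) by (apply prov_negR; wk (prov_star_ind _ _ HZ)).
    apply prov_negL. wk (prov_boxC (Star p) (Neg Z) [] [Z] H1). }
  assert (HY : [BoxC (Star p) (Neg Z)] ⊢ [Y]).
  { apply prov_boxC_mono. apply prov_negL. wk (prov_tense (Star p) psi). }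
  assert (H : [Neg Y] ⊢ [Box p (Neg Y)]).
  { assert (H1 := prov_negL_inv _ _ _ (prov_trans _ _ _ Hinv HY)).
    apply (prov_trans _ Z); [apply prov_negL; wk H1|].
    exact (prov_trans _ _ _ HZ (prov_box_mono p _ _ HnY)). }
  apply prov_negR_inv. wk (prov_boxC p Y [] [Neg Y] (prov_negL_inv _ _ _ H)).
Qed.
End ConverseBoxes.

(** * Completeness *)

Scheme form_ind_mut := Induction for Defs.form Sort Prop
with prog_ind_mut := Induction for Defs.prog Sort Prop.
Combined Scheme form_prog_ind from form_ind_mut, prog_ind_mut.

Section FischerLadner.
Context {P A : Type}.
Notation form := (form P A).
Notation prog := (prog P A).

Inductive fl_step : form -> form -> Prop :=
| fl_impl f g : fl_step (Imp f g) f
| fl_impr f g : fl_step (Imp f g) g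
| fl_atom a g : fl_step (Box (Atom a) g) g
| fl_seq p q g : fl_step (Box (Seq p q) g) (Box p (Box q g))
| fl_cupl p q g : fl_step (Box (Cup p q) g) (Box p g)
| fl_cupr p q g : fl_step (Box (Cup p q) g) (Box q g)
| fl_star_refl p g : fl_step (Box (Star p) g) g
| fl_star_step p g : fl_step (Box (Star p) g) (Box p (Box (Star p) g))
| fl_test_cond f g : fl_step (Box (Test f) g) f
| fl_test f g : fl_step (Box (Test f) g) g
| flC_atom a g : fl_step (BoxC (Atom a) g) g
| flC_seq p q g : fl_step (BoxC (Seq p q) g) (BoxC q (BoxC p g))
| flC_cupl p q g : fl_step (BoxC (Cup p q) g) (BoxC p g)
| flC_cupr p q g : fl_step (BoxC (Cup p q) g) (BoxC q g)
| flC_star_refl p g : fl_step (BoxC (Star p) g) g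
| flC_star_step p g : fl_step (BoxC (Star p) g) (BoxC p (BoxC (Star p) g))
| flC_test_cond f g : fl_step (BoxC (Test f) g) f
| flC_test f g : fl_step (BoxC (Test f) g) g.

Definition fl_closed (C : list form) : Prop := forall x y, In x C -> fl_step x y -> In y C.

Fixpoint fl (f : form) : list form :=
  match f with
  | Bot => [Bot]
  | Var q => [Var q]
  | Imp f g => Imp f g :: fl f ++ fl g
  | Box p g => flb p g ++ fl g
  | BoxC p g => flc p g ++ fl g
  end
with flb (p : prog) (g : form) : list form :=
  match p with
  | Atom a => [Box (Atom a) g]
  | Seq p q => Box (Seq p q) g :: flb p (Box q g) ++ flb q g
  | Cup p q => Box (Cup p q) g :: flb p g ++ flb q g
  | Star p => Box (Star p) g :: flb p (Box (Star p) g)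
  | Test h => Box (Test h) g :: fl h
  end
with flc (p : prog) (g : form) : list form :=
  match p with
  | Atom a => [BoxC (Atom a) g]
  | Seq p q => BoxC (Seq p q) g :: flc q (BoxC p g) ++ flc p g
  | Cup p q => BoxC (Cup p q) g :: flc p g ++ flc q g
  | Star p => BoxC (Star p) g :: flc p (BoxC (Star p) g)
  | Test h => BoxC (Test h) g :: fl h
  end.

Lemma flb_head p g : In (Box p g) (flb p g).
Proof. destruct p; simpl; auto. Qed.

Lemma flc_head p g : In (BoxC p g) (flc p g).
Proof. destruct p; simpl; auto. Qed.

Lemma fl_self f : In f (fl f).
Proof. destruct f; simpl; rewrite ?in_app_iff; auto using flb_head, flc_head. Qed.

Definition fl_prog_closed (p : prog) : Prop :=
  forall g, (forall x y, In x (flb p g) -> fl_step x y -> In y (flb p g) \/ y = g) /\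
            (forall x y, In x (flc p g) -> fl_step x y -> In y (flc p g) \/ y = g).

Lemma fl_prog_closed_seq p q : fl_prog_closed p -> fl_prog_closed q -> fl_prog_closed (Seq p q).
Proof.
  intros IHp IHq g; split; intros x y Hx Hd; simpl in *; rewrite in_app_iff in *.
  - destruct Hx as [<-|[Hx|Hx]].
    + inversion Hd; subst. left; right; left; apply flb_head.
    + destruct (proj1 (IHp (Box q g)) x y Hx Hd) as [H| ->]; [auto|].
      left; right; right; apply flb_head.
    + destruct (proj1 (IHq g) x y Hx Hd) as [H| ->]; auto.
  - destruct Hx as [<-|[Hx|Hx]].
    + inversion Hd; subst. left; right; left; apply flc_head.
    + destruct (proj2 (IHq (BoxC p g)) x y Hx Hd) as [H| ->]; [auto|].
      left; right; right; apply flc_head.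
    + destruct (proj2 (IHp g) x y Hx Hd) as [H| ->]; auto.
Qed.

Lemma fl_prog_closed_cup p q : fl_prog_closed p -> fl_prog_closed q -> fl_prog_closed (Cup p q).
Proof.
  intros IHp IHq g; split; intros x y Hx Hd; simpl in *; rewrite in_app_iff in *;
    (destruct Hx as [<-|[Hx|Hx]]; [inversion Hd; subst; left; right; [left|right];
      apply flb_head || apply flc_head|..]).
  - destruct (proj1 (IHp g) x y Hx Hd) as [H| ->]; auto.
  - destruct (proj1 (IHq g) x y Hx Hd) as [H| ->]; auto.
  - destruct (proj2 (IHp g) x y Hx Hd) as [H| ->]; auto.
  - destruct (proj2 (IHq g) x y Hx Hd) as [H| ->]; auto.
Qed.

Lemma fl_prog_closed_star p : fl_prog_closed p -> fl_prog_closed (Star p).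
Proof.
  intros IHp g; split; intros x y Hx Hd; simpl in *.
  - destruct Hx as [<-|Hx].
    + inversion Hd; subst; auto. left; right; apply flb_head.
    + destruct (proj1 (IHp (Box (Star p) g)) x y Hx Hd) as [H| ->]; auto.
  - destruct Hx as [<-|Hx].
    + inversion Hd; subst; auto. left; right; apply flc_head.
    + destruct (proj2 (IHp (BoxC (Star p) g)) x y Hx Hd) as [H| ->]; auto.
Qed.

Lemma fl_closed_mut : (forall f, fl_closed (fl f)) /\ (forall p, fl_prog_closed p).
Proof.
  apply (form_prog_ind P A (fun f => fl_closed (fl f)) fl_prog_closed); unfold fl_closed;
    try (intros; first [apply fl_prog_closed_seq|apply fl_prog_closed_cup
                        |apply fl_prog_closed_star]; assumption).
  - intros x y [<-|[]] H; inversion H.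
  - intros q x y [<-|[]] H; inversion H.
  - intros f IHf g IHg x y Hx Hd. simpl in *. rewrite in_app_iff in *.
    destruct Hx as [<-|[Hx|Hx]]; [inversion Hd; subst; right; [left|right]; apply fl_self
      |right; left; eauto|right; right; eauto].
  - intros p IHp g IHg x y Hx Hd. simpl in *. rewrite in_app_iff in *.
    destruct Hx as [Hx|Hx]; [|right; eauto].
    destruct (proj1 (IHp g) x y Hx Hd) as [H| ->]; [auto|right; apply fl_self].
  - intros p IHp g IHg x y Hx Hd. simpl in *. rewrite in_app_iff in *.
    destruct Hx as [Hx|Hx]; [|right; eauto].
    destruct (proj2 (IHp g) x y Hx Hd) as [H| ->]; [auto|right; apply fl_self].
  - intros a g; split; intros x y [<-|[]] H; inversion H; auto.
  - intros h IHh g; split; intros x y Hx Hd; simpl in *;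
      (destruct Hx as [<-|Hx]; [inversion Hd; subst; auto; left; right; apply fl_self
        |left; right; eauto]).
Qed.

Definition fl_closure (l : list form) : list form := flat_map fl l.

Lemma fl_closure_closed l : fl_closed (fl_closure l).
Proof.
  intros x y Hx Hd. apply in_flat_map in Hx as [f [Hf Hx]].
  apply in_flat_map. exists f. split; [exact Hf|exact (proj1 fl_closed_mut f x y Hx Hd)].
Qed.

Lemma fl_closure_incl l : incl l (fl_closure l).
Proof. intros f Hf. apply in_flat_map. exists f. split; [exact Hf|apply fl_self]. Qed.

Fixpoint tests_in (C : list form) (p : prog) : Prop :=
  match p with
  | Atom _ => True
  | Seq p q | Cup p q => tests_in C p /\ tests_in C q
  | Star p => tests_in C p
  | Test h => In h C
  end.

Section Closed.
Variable C : list form.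
Hypothesis HC : fl_closed C.

Lemma box_body_in p : forall g, In (Box p g) C -> In g C.
Proof.
  induction p; intros g H.
  - eapply HC; [exact H|constructor].
  - apply IHp2, IHp1. eapply HC; [exact H|constructor].
  - apply IHp1. eapply HC; [exact H|constructor].
  - eapply HC; [exact H|constructor].
  - eapply HC; [exact H|constructor].
Qed.

Lemma boxC_body_in p : forall g, In (BoxC p g) C -> In g C.
Proof.
  induction p; intros g H.
  - eapply HC; [exact H|constructor].
  - apply IHp1, IHp2. eapply HC; [exact H|constructor].
  - apply IHp1. eapply HC; [exact H|constructor].
  - eapply HC; [exact H|constructor].
  - eapply HC; [exact H|constructor].
Qed.

Lemma box_tests_in p : forall g, In (Box p g) C -> tests_in C p.
Proof.
  induction p; intros g H; simpl.
  - exact I.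
  - split; [apply (IHp1 (Box p2 g))|apply (IHp2 g), (box_body_in p1)];
      eapply HC; eauto; constructor.
  - split; [apply (IHp1 g)|apply (IHp2 g)]; eapply HC; eauto; constructor.
  - apply (IHp (Box (Star p) g)). eapply HC; eauto. constructor.
  - eapply HC; eauto. constructor.
Qed.

Lemma boxC_tests_in p : forall g, In (BoxC p g) C -> tests_in C p.
Proof.
  induction p; intros g H; simpl.
  - exact I.
  - split; [apply (IHp1 g), (boxC_body_in p2)|apply (IHp2 (BoxC p1 g))];
      eapply HC; eauto; constructor.
  - split; [apply (IHp1 g)|apply (IHp2 g)]; eapply HC; eauto; constructor.
  - apply (IHp (BoxC (Star p) g)). eapply HC; eauto. constructor.
  - eapply HC; eauto. constructor.
Qed.
End Closed.
End FischerLadner.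

Definition filterP {T : Type} (Q : T -> Prop) (l : list T) : list T :=
  filter (fun x => if excluded_middle_informative (Q x) then true else false) l.

Lemma filterP_In {T : Type} (Q : T -> Prop) l x : In x (filterP Q l) <-> In x l /\ Q x.
Proof.
  unfold filterP. rewrite filter_In.
  destruct (excluded_middle_informative (Q x)); split; intros [H1 H2]; auto; discriminate.
Qed.

Section Atoms.
Context {P A : Type}.
Notation form := (form P A).
Implicit Types (G D K X : list form) (f : form).

Lemma lindenbaum X K : forall G D, ~ G ⊢ X ++ D ->
  exists G' D', incl G G' /\ incl D D' /\ incl G' (G ++ K) /\ incl D' (D ++ K) /\
    (forall f, In f K -> In f G' \/ In f D') /\ ~ G' ⊢ X ++ D'.
Proof.
  induction K as [|f K IH]; intros G D H.
  - exists G, D. do 4 (split; [incl_tac|]). split; [intros f []|exact H].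
  - destruct (classic (f :: G ⊢ X ++ D)) as [Hp|Hp].
    + assert (H' : ~ G ⊢ X ++ f :: D) by (intro H1; apply H, (prov_cut f); [wk H1|exact Hp]).
      destruct (IH G (f :: D) H') as [G' [D' [H1 [H2 [H3 [H4 [H5 H6]]]]]]].
      exists G', D'. split; [exact H1|split; [intros z Hz; apply H2; right; exact Hz|]].
      split; [|split; [|split; [|exact H6]]].
      * intros z Hz. apply H3 in Hz. rewrite in_app_iff in *. simpl. tauto.
      * intros z Hz. apply H4 in Hz. rewrite in_app_iff in *. simpl in *. tauto.
      * intros g [<-|Hg]; [right; apply H2; left; reflexivity|apply H5, Hg].
    + destruct (IH (f :: G) D Hp) as [G' [D' [H1 [H2 [H3 [H4 [H5 H6]]]]]]].
      exists G', D'. split; [intros z Hz; apply H1; right; exact Hz|split; [exact H2|]].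
      split; [|split; [|split; [|exact H6]]].
      * intros z Hz. apply H3 in Hz. rewrite in_app_iff in *. simpl in *. tauto.
      * intros z Hz. apply H4 in Hz. rewrite in_app_iff in *. simpl. tauto.
      * intros g [<-|Hg]; [left; apply H1; left; reflexivity|apply H5, Hg].
Qed.

Fixpoint partitions K : list (sequent P A) :=
  match K with
  | [] => [([], [])]
  | f :: K => flat_map (fun B => [(f :: fst B, snd B); (fst B, f :: snd B)]) (partitions K)
  end.

Lemma partitions_complete K (Q : form -> Prop) : exists B, In B (partitions K) /\
  (forall f, In f (fst B) <-> In f K /\ Q f) /\ (forall f, In f (snd B) <-> In f K /\ ~ Q f).
Proof.
  induction K as [|g K [B [HB [H1 H2]]]].
  - exists ([], []). simpl. split; [auto|split; intro f; tauto].
  - destruct (classic (Q g)) as [Hq|Hq]; [exists (g :: fst B, snd B)|exists (fst B, g :: snd B)];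
      (split; [apply in_flat_map; exists B; simpl; auto|]);
      simpl; split; intro f; rewrite ?H1, ?H2; intuition (subst; auto); tauto.
Qed.

Variable C : list form.

Definition atom (B : sequent P A) : Prop :=
  incl (fst B) C /\ incl (snd B) C /\ (forall f, In f C -> In f (fst B) \/ In f (snd B)) /\
  ~ fst B ⊢ snd B.

(* Atoms are considered up to the sets they denote; each has a representative among the
   finitely many partitions of [C]. *)
Lemma atom_partition B : atom B -> exists B', In B' (partitions C) /\ atom B' /\
  seteq (fst B) (fst B') /\ seteq (snd B) (snd B').
Proof.
  intros [HL [HR [Hcov Hnp]]].
  destruct (partitions_complete C (fun f => In f (fst B))) as [B' [Hin [H1 H2]]].
  assert (E1 : seteq (fst B) (fst B')) by (intro f; rewrite H1; split; [auto|tauto]).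
  assert (E2 : seteq (snd B) (snd B')).
  { intro f. rewrite H2. split.
    - intro Hf. split; [apply HR, Hf|]. intro Hf'. apply Hnp, (prov_ax f); assumption.
    - intros [Hf Hf']. destruct (Hcov f Hf); tauto. }
  exists B'. split; [exact Hin|split; [|split; [exact E1|exact E2]]].
  split; [|split; [|split]].
  - intros f Hf. apply H1 in Hf. tauto.
  - intros f Hf. apply H2 in Hf. tauto.
  - intros f Hf. destruct (Hcov f Hf); [left; apply E1|right; apply E2]; assumption.
  - intro Hp. apply Hnp. apply (prov_wk _ _ _ _ Hp); intros f Hf; [apply E1|apply E2]; exact Hf.
Qed.

Definition world : Type := {B : sequent P A | In B (partitions C) /\ atom B}.
Definition L (w : world) : list form := fst (proj1_sig w).
Definition R (w : world) : list form := snd (proj1_sig w).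

Lemma extend_to_world X G D : incl G C -> incl D C -> ~ G ⊢ X ++ D ->
  exists w, incl G (L w) /\ incl D (R w) /\ ~ L w ⊢ X ++ R w.
Proof.
  intros HG HD H. destruct (lindenbaum X C G D H) as [G' [D' [H1 [H2 [H3 [H4 [H5 H6]]]]]]].
  assert (Hsub : forall K, incl K C -> incl (K ++ C) C)
    by (intros K HK z Hz; apply in_app_iff in Hz as [Hz|Hz]; [apply HK|]; exact Hz).
  assert (Hat : atom (G', D')).
  { split; [exact (incl_tran H3 (Hsub G HG))|split; [exact (incl_tran H4 (Hsub D HD))|]].
    split; [exact H5|].
    intro Hp. apply H6. wk Hp. }
  destruct (atom_partition _ Hat) as [B [HB [HatB [E1 E2]]]].
  exists (exist _ B (conj HB HatB)). unfold L, R; simpl.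
  split; [intros f Hf; apply E1, H1, Hf|split; [intros f Hf; apply E2, H2, Hf|]].
  intro Hp. apply H6. apply (prov_wk _ _ _ _ Hp); [intros f Hf; apply E1, Hf|].
  intros f Hf. apply in_app_iff in Hf as [Hf|Hf]; apply in_app_iff;
    [left; exact Hf|right; apply E2, Hf].
Qed.

Section World.
Variable w : world.

Lemma L_in_C : incl (L w) C.
Proof. apply (proj2 (proj2_sig w)). Qed.

Lemma R_in_C : incl (R w) C.
Proof. apply (proj2 (proj2_sig w)). Qed.

Lemma L_or_R f : In f C -> In f (L w) \/ In f (R w).
Proof. apply (proj2 (proj2_sig w)). Qed.

Lemma L_not_prov : ~ L w ⊢ R w.
Proof. apply (proj2 (proj2_sig w)). Qed.

Lemma L_R_disjoint f : In f (L w) -> In f (R w) -> False.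
Proof. intros H1 H2. apply L_not_prov, (prov_ax f); assumption. Qed.

Lemma R_not_prov f : In f (R w) -> ~ L w ⊢ f :: R w.
Proof.
  intros Hf Hp. apply L_not_prov. apply (prov_wk _ _ _ _ Hp); [incl_tac|intros z [<-|Hz]; auto].
Qed.

Lemma L_closed f : In f C -> L w ⊢ f :: R w -> In f (L w).
Proof. intros HfC Hp. destruct (L_or_R f HfC) as [H|H]; [exact H|elim (R_not_prov f H Hp)]. Qed.

Lemma L_entail G f : In f C -> incl G (L w) -> G ⊢ [f] -> In f (L w).
Proof. intros HfC HG Hp. apply L_closed; [exact HfC|]. apply (prov_wk _ _ _ _ Hp); incl_tac. Qed.
End World.
End Atoms.

Section Canonical.
Context {P A : Type}.
Notation form := (form P A).
Notation prog := (prog P A).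
Variable C : list form.
Hypothesis HC : fl_closed C.
Notation world := (world C).
Notation L := (L C).
Notation R := (R C).

Definition canon_rel (a : A) (w v : world) : Prop :=
  (forall g, In (Box (Atom a) g) (L w) -> In g (L v)) /\
  (forall g, In (BoxC (Atom a) g) (L v) -> In g (L w)).

Definition canon : model P A := @Model P A world canon_rel (fun w q => In (Var q) (L w)).

Definition box_sound (p : prog) : Prop :=
  forall psi (w v : world), In (Box p psi) (L w) -> rel canon p w v -> In psi (L v).
Definition box_witness (p : prog) : Prop :=
  forall th (w : world), ~ L w ⊢ Box p th :: R w -> exists v, rel canon p w v /\ ~ L v ⊢ th :: R v.
Definition boxC_sound (p : prog) : Prop :=
  forall psi (w v : world), In (BoxC p psi) (L w) -> rel canon p v w -> In psi (L v).
Definition boxC_witness (p : prog) : Prop :=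
  forall th (w : world), ~ L w ⊢ BoxC p th :: R w -> exists v, rel canon p v w /\ ~ L v ⊢ th :: R v.

Definition prog_truth (p : prog) : Prop :=
  tests_in C p -> box_sound p /\ box_witness p /\ boxC_sound p /\ boxC_witness p.
Definition form_truth (f : form) : Prop :=
  In f C -> forall w : world, sat canon w f <-> In f (L w).

Lemma in_C_step (w : world) x y : In x (L w) -> fl_step x y -> In y C.
Proof. intros Hx Hs. exact (HC x y (L_in_C C w x Hx) Hs). Qed.

Lemma L_step (w : world) x y : In x (L w) -> fl_step x y -> [x] ⊢ [y] -> In y (L w).
Proof.
  intros Hx Hs Hp. apply (L_entail C w [x] y (in_C_step w x y Hx Hs)); [|exact Hp].
  intros z [<-|[]]. exact Hx.
Qed.

Lemma prov_not_entailR (w : world) x y : [x] ⊢ [y] -> ~ L w ⊢ y :: R w -> ~ L w ⊢ x :: R w.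
Proof. intros H1 H2 H3. exact (H2 (prov_entailR _ _ _ _ H1 H3)). Qed.

Lemma box_witness_atom a : box_witness (Atom a).
Proof.
  intros th w Hn.
  set (G0 := filterP (fun g => In (Box (Atom a) g) (L w)) C).
  set (D0 := filterP (fun d => In (BoxC (Atom a) d) C /\ In d (R w)) C).
  assert (HG0 : forall g, In g G0 <-> In (Box (Atom a) g) (L w)).
  { intro g. unfold G0. rewrite filterP_In. split; [tauto|].
    intro H. split; [exact (in_C_step w _ _ H (fl_atom _ _))|exact H]. }
  assert (HD0 : forall d, In d D0 <-> In (BoxC (Atom a) d) C /\ In d (R w)).
  { intro d. unfold D0. rewrite filterP_In. split; [tauto|].
    intros [H1 H2]. split; [exact (R_in_C C w d H2)|auto]. }
  destruct (extend_to_world C [th] G0 (map (BoxC (Atom a)) D0)) as [v [H1 [H2 H3]]].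
  - intros g Hg. apply filterP_In in Hg. tauto.
  - intros z Hz. apply in_map_iff in Hz as [d [<- Hd]]. apply HD0, Hd.
  - intro Hp. apply Hn. apply (prov_wk _ _ _ _ (prov_box _ _ _ _ Hp)).
    + intros z Hz. apply in_map_iff in Hz as [g [<- Hg]]. apply HG0, Hg.
    + intros z [<-|Hz]; [left; reflexivity|right; apply HD0, Hz].
  - exists v. split; [split|exact H3].
    + intros g Hg. apply H1, HG0, Hg.
    + intros g Hg.
      destruct (L_or_R C w g (boxC_body_in C HC (Atom a) g (L_in_C C v _ Hg))) as [Hl|Hr];
        [exact Hl|exfalso].
      apply (L_R_disjoint C v (BoxC (Atom a) g) Hg). apply H2, in_map, HD0.
      split; [exact (L_in_C C v _ Hg)|exact Hr].
Qed.

Lemma boxC_witness_atom a : boxC_witness (Atom a).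
Proof.
  intros th w Hn.
  set (G0 := filterP (fun g => In (BoxC (Atom a) g) (L w)) C).
  set (D0 := filterP (fun d => In (Box (Atom a) d) C /\ In d (R w)) C).
  assert (HG0 : forall g, In g G0 <-> In (BoxC (Atom a) g) (L w)).
  { intro g. unfold G0. rewrite filterP_In. split; [tauto|].
    intro H. split; [exact (in_C_step w _ _ H (flC_atom _ _))|exact H]. }
  assert (HD0 : forall d, In d D0 <-> In (Box (Atom a) d) C /\ In d (R w)).
  { intro d. unfold D0. rewrite filterP_In. split; [tauto|].
    intros [H1 H2]. split; [exact (R_in_C C w d H2)|auto]. }
  destruct (extend_to_world C [th] G0 (map (Box (Atom a)) D0)) as [v [H1 [H2 H3]]].
  - intros g Hg. apply filterP_In in Hg. tauto.
  - intros z Hz. apply in_map_iff in Hz as [d [<- Hd]]. apply HD0, Hd.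
  - intro Hp. apply Hn. apply (prov_wk _ _ _ _ (prov_boxC _ _ _ _ Hp)).
    + intros z Hz. apply in_map_iff in Hz as [g [<- Hg]]. apply HG0, Hg.
    + intros z [<-|Hz]; [left; reflexivity|right; apply HD0, Hz].
  - exists v. split; [split|exact H3].
    + intros g Hg.
      destruct (L_or_R C w g (box_body_in C HC (Atom a) g (L_in_C C v _ Hg))) as [Hl|Hr];
        [exact Hl|exfalso].
      apply (L_R_disjoint C v (Box (Atom a) g) Hg). apply H2, in_map, HD0.
      split; [exact (L_in_C C v _ Hg)|exact Hr].
    + intros g Hg. apply H1, HG0, Hg.
Qed.

Lemma prog_truth_atom a : prog_truth (Atom a).
Proof.
  intros _. split; [|split; [apply box_witness_atom|split; [|apply boxC_witness_atom]]].
  - intros psi w v Hin [H _]. exact (H psi Hin).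
  - intros psi w v Hin [_ H]. exact (H psi Hin).
Qed.

Section ProgramTruth.
Variables p q : prog.
Hypotheses (Hp : box_sound p /\ box_witness p /\ boxC_sound p /\ boxC_witness p)
           (Hq : box_sound q /\ box_witness q /\ boxC_sound q /\ boxC_witness q).

Lemma prog_truth_seq : box_sound (Seq p q) /\ box_witness (Seq p q) /\
  boxC_sound (Seq p q) /\ boxC_witness (Seq p q).
Proof.
  destruct Hp as [Sp [Wp [Sp' Wp']]], Hq as [Sq [Wq [Sq' Wq']]].
  split; [|split; [|split]].
  - intros psi w v Hin [u [H1 H2]]. apply (Sq psi u v); [|exact H2].
    apply (Sp _ w u); [|exact H1].
    exact (L_step w _ _ Hin (fl_seq _ _ _) (box_seq_unfold p q psi)).
  - intros th w Hn.
    destruct (Wp (Box q th) w) as [u [H1 H2]].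
    { intro H. apply Hn, (prov_seqR p q th); [left; reflexivity|wk H]. }
    destruct (Wq th u H2) as [v [H3 H4]]. exists v. split; [exists u; auto|exact H4].
  - intros psi w v Hin [u [H1 H2]]. apply (Sp' psi u v); [|exact H1].
    apply (Sq' _ w u); [|exact H2].
    exact (L_step w _ _ Hin (flC_seq _ _ _) (boxC_seq_unfold p q psi)).
  - intros th w Hn.
    destruct (Wq' (BoxC p th) w) as [u [H1 H2]].
    { exact (prov_not_entailR w _ _ (boxC_seq_fold p q th) Hn). }
    destruct (Wp' th u H2) as [v [H3 H4]]. exists v. split; [exists u; auto|exact H4].
Qed.

Lemma prog_truth_cup : box_sound (Cup p q) /\ box_witness (Cup p q) /\
  boxC_sound (Cup p q) /\ boxC_witness (Cup p q).
Proof.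
  destruct Hp as [Sp [Wp [Sp' Wp']]], Hq as [Sq [Wq [Sq' Wq']]].
  split; [|split; [|split]].
  - intros psi w v Hin [H|H]; [apply (Sp _ w)|apply (Sq _ w)]; try exact H;
      (eapply L_step; [exact Hin|constructor|apply box_cup_unfold]).
  - intros th w Hn.
    destruct (classic (L w ⊢ Box p th :: R w)) as [H1|H1].
    + destruct (Wq th w) as [v [H2 H3]]; [|exists v; split; [right; exact H2|exact H3]].
      intro H2. apply Hn, (prov_cupR p q th); [left; reflexivity|wk H1|wk H2].
    + destruct (Wp th w H1) as [v [H2 H3]]. exists v. split; [left; exact H2|exact H3].
  - intros psi w v Hin [H|H]; [apply (Sp' _ w)|apply (Sq' _ w)]; try exact H;
      (eapply L_step; [exact Hin|constructor|apply boxC_cup_unfold]).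
  - intros th w Hn.
    destruct (classic (L w ⊢ BoxC p th :: R w)) as [H1|H1].
    + destruct (Wq' th w) as [v [H2 H3]]; [|exists v; split; [right; exact H2|exact H3]].
      intro H2. exact (Hn (prov_entail2R _ _ _ _ _ (boxC_cup_fold p q th) H1 H2)).
    + destruct (Wp' th w H1) as [v [H2 H3]]. exists v. split; [left; exact H2|exact H3].
Qed.
End ProgramTruth.

Lemma prog_truth_test g : form_truth g -> In g C ->
  box_sound (Test g) /\ box_witness (Test g) /\ boxC_sound (Test g) /\ boxC_witness (Test g).
Proof.
  intros Hg HgC. split; [|split; [|split]].
  - intros psi w v Hin [<- Hs]. apply (L_entail C w [Box (Test g) psi; g]).
    + exact (in_C_step w _ _ Hin (fl_test _ _)).
    + intros z [<-|[<-|[]]]; [exact Hin|apply (Hg HgC w), Hs].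
    + apply (prov_testL g psi); [simpl; auto|apply (prov_ax g)|apply (prov_ax psi)]; simpl; auto.
  - intros th w Hn. exists w. split; [split; [reflexivity|]|].
    + apply (Hg HgC w). destruct (L_or_R C w g HgC) as [H|H]; [exact H|exfalso].
      apply Hn, (prov_testR g th); [left; reflexivity|]. apply (prov_ax g); simpl; auto.
    + intro H. apply Hn, (prov_testR g th); [left; reflexivity|wk H].
  - intros psi w v Hin [-> Hs]. apply (L_entail C w [BoxC (Test g) psi; g]).
    + exact (in_C_step w _ _ Hin (flC_test _ _)).
    + intros z [<-|[<-|[]]]; [exact Hin|apply (Hg HgC w), Hs].
    + apply boxC_test_unfold.
  - intros th w Hn.
    assert (Hn' : ~ g :: L w ⊢ th :: R w).
    { intro H. apply (prov_not_entailR w _ _ (boxC_test_fold g th) Hn).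
      apply (prov_impR g th); [left; reflexivity|wk H]. }
    exists w. split; [split; [reflexivity|]|intro H; apply Hn'; wk H].
    apply (Hg HgC w). destruct (L_or_R C w g HgC) as [H|H]; [exact H|exfalso].
    apply Hn'. apply (prov_ax g); simpl; auto.
Qed.

(* A finite disjunction, since every world is one of the partitions of [C]. *)
Definition chis (S : world -> Prop) : form :=
  disj (map chi (filterP (fun B => exists v, proj1_sig v = B /\ S v) (partitions C))).

Lemma prov_chisR (S : world -> Prop) v : S v -> L v ⊢ chis S :: R v.
Proof.
  intro Hv. apply prov_disjR.
  apply (prov_wk (L v) (chi (proj1_sig v) :: R v)); [apply prov_chiR; incl_tac|incl_tac|].
  intros z [<-|Hz]; apply in_app_iff; [left|right; exact Hz].
  apply in_map, filterP_In. split; [apply (proj1 (proj2_sig v))|exists v; auto].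
Qed.

Lemma prov_chisL (S : world -> Prop) f : (forall v, S v -> L v ⊢ f :: R v) -> [chis S] ⊢ [f].
Proof.
  intro H. apply prov_disjL. intros h Hh.
  apply in_map_iff in Hh as [B [<- HB]]. apply filterP_In in HB as [_ [v [<- Hv]]].
  apply prov_chiL. wk (H v Hv).
Qed.

(* If no world reachable from [w] refutes [th], the worlds reachable from [w] form an
   invariant [X] with [X |- [p]X] and [X |- th], so the induction rule yields [[p*]th]. *)
Lemma box_witness_star p : box_witness p -> box_witness (Star p).
Proof.
  intros Wp th w Hn. apply NNPP. intro Hno.
  set (S := fun v => rel canon (Star p) w v).
  assert (Hall : forall v, S v -> L v ⊢ th :: R v).
  { intros v Hv. apply NNPP. intro H. apply Hno. exists v. auto. }
  assert (Hstep : [chis S] ⊢ [Box p (chis S)]).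
  { apply prov_chisL. intros v Hv. apply NNPP. intro H.
    destruct (Wp _ v H) as [u [Hr Hu]]. apply Hu, prov_chisR.
    apply rt_trans with v; [exact Hv|apply rt_step, Hr]. }
  apply Hn. apply (prov_entailR (Box (Star p) (chis S))).
  - exact (prov_box_mono _ _ _ (prov_chisL S th Hall)).
  - apply (prov_entailR _ _ _ _ (prov_star_ind _ _ Hstep)). apply prov_chisR, rt_refl.
Qed.

Lemma boxC_witness_star p : boxC_witness p -> boxC_witness (Star p).
Proof.
  intros Wp th w Hn. apply NNPP. intro Hno.
  set (S := fun v => rel canon (Star p) v w).
  assert (Hall : forall v, S v -> L v ⊢ th :: R v).
  { intros v Hv. apply NNPP. intro H. apply Hno. exists v. auto. }
  assert (Hstep : [chis S] ⊢ [BoxC p (chis S)]).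
  { apply prov_chisL. intros v Hv. apply NNPP. intro H.
    destruct (Wp _ v H) as [u [Hr Hu]]. apply Hu, prov_chisR.
    apply rt_trans with v; [apply rt_step, Hr|exact Hv]. }
  apply Hn. apply (prov_entailR (BoxC (Star p) (chis S))).
  - exact (prov_boxC_mono _ _ _ (prov_chisL S th Hall)).
  - apply (prov_entailR _ _ _ _ (boxC_star_ind _ _ Hstep)). apply prov_chisR, rt_refl.
Qed.

Lemma box_sound_star p : box_sound p -> box_sound (Star p).
Proof.
  intros Sp psi w v Hin Hr. simpl in Hr. apply clos_rt_rt1n in Hr.
  induction Hr as [x|x y z Hxy _ IH].
  - exact (L_step x _ _ Hin (fl_star_refl _ _) (proj1 (box_star_unfold p psi))).
  - apply IH, (Sp _ x y); [|exact Hxy].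
    exact (L_step x _ _ Hin (fl_star_step _ _) (proj2 (box_star_unfold p psi))).
Qed.

Lemma boxC_sound_star p : boxC_sound p -> boxC_sound (Star p).
Proof.
  intros Sp psi w v Hin Hr. simpl in Hr. apply clos_rt_rtn1 in Hr.
  induction Hr as [|y z Hyz _ IH].
  - exact (L_step v _ _ Hin (flC_star_refl _ _) (boxC_star_unfold_refl p psi)).
  - apply IH, (Sp _ z y); [|exact Hyz].
    exact (L_step z _ _ Hin (flC_star_step _ _) (boxC_star_unfold_step p psi)).
Qed.

Lemma prog_truth_star p : prog_truth p -> prog_truth (Star p).
Proof.
  intros Hp Ht. destruct (Hp Ht) as [Sp [Wp [Sp' Wp']]].
  split; [apply box_sound_star, Sp|split; [apply box_witness_star, Wp|]].
  split; [apply boxC_sound_star, Sp'|apply boxC_witness_star, Wp'].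
Qed.

Lemma form_truth_imp f g : form_truth f -> form_truth g -> form_truth (Imp f g).
Proof.
  intros Hf Hg HI w.
  assert (HfC : In f C) by exact (HC _ _ HI (fl_impl f g)).
  assert (HgC : In g C) by exact (HC _ _ HI (fl_impr f g)).
  simpl. rewrite (Hf HfC w), (Hg HgC w). split.
  - intro H. apply (L_closed C w _ HI). apply (prov_impR f g); [left; reflexivity|].
    destruct (L_or_R C w f HfC) as [Hl|Hr].
    + apply (prov_ax g); [right; apply H, Hl|left; reflexivity].
    + apply (prov_ax f); [left; reflexivity|right; right; exact Hr].
  - intros HL Hfl. apply (L_entail C w [Imp f g; f]); [exact HgC| |].
    { intros z [<-|[<-|[]]]; assumption. }
    apply (prov_impL f g); [simpl; auto|apply (prov_ax f)|apply (prov_ax g)]; simpl; auto.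
Qed.

Lemma form_truth_box p psi : prog_truth p -> form_truth psi -> form_truth (Box p psi).
Proof.
  intros Hp Hpsi HB w.
  assert (HpsiC := box_body_in C HC p psi HB).
  destruct (Hp (box_tests_in C HC p psi HB)) as [Sp [Wp _]]. simpl. split.
  - intro Hs. destruct (L_or_R C w _ HB) as [Hl|Hr]; [exact Hl|exfalso].
    destruct (Wp psi w (R_not_prov C w _ Hr)) as [v [Hrel Hn]].
    apply Hn, (prov_ax psi); [apply (Hpsi HpsiC v), Hs, Hrel|left; reflexivity].
  - intros Hin v Hrel. apply (Hpsi HpsiC v). exact (Sp psi w v Hin Hrel).
Qed.

Lemma form_truth_boxC p psi : prog_truth p -> form_truth psi -> form_truth (BoxC p psi).
Proof.
  intros Hp Hpsi HB w.
  assert (HpsiC := boxC_body_in C HC p psi HB).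
  destruct (Hp (boxC_tests_in C HC p psi HB)) as [_ [_ [Sp Wp]]]. simpl. split.
  - intro Hs. destruct (L_or_R C w _ HB) as [Hl|Hr]; [exact Hl|exfalso].
    destruct (Wp psi w (R_not_prov C w _ Hr)) as [v [Hrel Hn]].
    apply Hn, (prov_ax psi); [apply (Hpsi HpsiC v), Hs, Hrel|left; reflexivity].
  - intros Hin v Hrel. apply (Hpsi HpsiC v). exact (Sp psi w v Hin Hrel).
Qed.

Lemma truth_lemma f : form_truth f.
Proof.
  refine (proj1 (form_prog_ind P A form_truth prog_truth _ _ _ _ _ _ _ _ _ _) f).
  - intros _ w. simpl. split; [tauto|]. intro H. apply (L_not_prov C w), prov_bot, H.
  - intros q _ w. reflexivity.
  - intros g Hg h Hh. exact (form_truth_imp g h Hg Hh).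
  - intros p Hp psi Hpsi. exact (form_truth_box p psi Hp Hpsi).
  - intros p Hp psi Hpsi. exact (form_truth_boxC p psi Hp Hpsi).
  - exact prog_truth_atom.
  - intros p Hp q Hq [Tp Tq]. exact (prog_truth_seq p q (Hp Tp) (Hq Tq)).
  - intros p Hp q Hq [Tp Tq]. exact (prog_truth_cup p q (Hp Tp) (Hq Tq)).
  - exact prog_truth_star.
  - intros g Hg HgC. exact (prog_truth_test g Hg HgC).
Qed.
End Canonical.

Theorem valid_prov {P A} (G D : list (form P A)) : valid (G, D) -> G ⊢ D.
Proof.
  intro Hv. apply NNPP. intro Hn.
  set (C := fl_closure (G ++ D)).
  assert (HGC : incl G C) by (intros f Hf; apply fl_closure_incl, in_app_iff; auto).
  assert (HDC : incl D C) by (intros f Hf; apply fl_closure_incl, in_app_iff; auto).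
  destruct (extend_to_world C [] G D HGC HDC Hn) as [w [HG [HD _]]].
  apply (proj1 (valid_iff_unfalsifiable _) Hv (canon C) w). split; simpl.
  - intros f Hf. apply (truth_lemma C (fl_closure_closed _) f (HGC f Hf) w), HG, Hf.
  - intros f Hf Hs. apply (truth_lemma C (fl_closure_closed _) f (HDC f Hf) w) in Hs.
    exact (L_R_disjoint C w f Hs (HD f Hf)).
Qed.

Theorem mainTheorem6 (P A : Type) (G D : list (form P A)) :
  (gprovable (G, D) <-> cprovable (G, D)) /\ (cprovable (G, D) <-> valid (G, D)).
Proof.
  split; split; intro H.
  - exact (prov_cprovable _ (valid_prov G D (gprovable_valid _ H))).
  - exact (prov_gprovable _ (valid_prov G D (cprovable_valid _ H))).
  - exact (cprovable_valid _ H).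
  - exact (prov_cprovable _ (valid_prov G D H)).
Qed.
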